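(* Let $\mathbf{x}_1,\ldots,\mathbf{x}_n\in\mathbb{R}^p$, $\|\cdot\|$ a norm on $\mathbb{R}^p$ with dual norm $\|\cdot\|_\dagger$, $\gamma\ge0$, and $\mathcal{E}$ a set of $\varepsilon$ pairs $l=(l_1,l_2)$, $l_1<l_2$, with weights $w_l>0$. Let $\boldsymbol{\Phi}\in\mathbb{R}^{\varepsilon\times n}$ be the oriented edge–vertex incidence matrix ($\Phi_{l,l_1}=1$, $\Phi_{l,l_2}=-1$, other entries $0$), $\mathbf{A}=\boldsymbol{\Phi}\otimes\mathbf{I}_p$ (so that $\mathbf{A}\,\mathrm{vec}(\mathbf{U})$ stacks the differences $\mathbf{u}_{l_1}-\mathbf{u}_{l_2}$), and $\mathbf{L}=\boldsymbol{\Phi}^t\boldsymbol{\Phi}$ the graph Laplacian. Then $\mathbf{A}^t\mathbf{A}=\mathbf{L}\otimes\mathbf{I}_p$ and $\rho(\mathbf{A}^t\mathbf{A})=\rho(\mathbf{L})$, the largest eigenvalue of $\mathbf{L}$. Consequently, if $0<\nu<2/\rho(\mathbf{L})$ and $\boldsymbol{\lambda}^0_l\in\mathbb{R}^p$ are arbitrary, the AMA iterates $$\boldsymbol{\Delta}^m_i=\sum_{l:l_1=i}\boldsymbol{\lambda}^{m-1}_l-\sum_{l:l_2=i}\boldsymbol{\lambda}^{m-1}_l,\quad \mathbf{u}^m_i=\mathbf{x}_i+\boldsymbol{\Delta}^m_i,\quad \mathbf{g}^m_l=\mathbf{u}^m_{l_1}-\mathbf{u}^m_{l_2},\quad \boldsymbol{\lambda}^m_l=\mathcal{P}_{C_l}(\boldsymbol{\lambda}^{m-1}_l-\nu\mathbf{g}^m_l)$$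 satisfy $\mathbf{U}^m\to\mathbf{U}^*$, the unique minimizer of $F_\gamma(\mathbf{U})=\frac12\sum_i\|\mathbf{x}_i-\mathbf{u}_i\|_2^2+\gamma\sum_{l\in\mathcal{E}}w_l\|\mathbf{u}_{l_1}-\mathbf{u}_{l_2}\|$, and $\boldsymbol{\Lambda}^m$ converges to an optimal dual multiplier $\boldsymbol{\Lambda}^*$.
   Context: $C_l=\{\boldsymbol{\lambda}\in\mathbb{R}^p:\|\boldsymbol{\lambda}\|_\dagger\le\gamma w_l\}$ and $\mathcal{P}_C$ is Euclidean projection onto $C$. $\mathbf{U}=(\mathbf{u}_1,\dots,\mathbf{u}_n)\in\mathbb{R}^{p\times n}$ and $\mathrm{vec}$ stacks columns. The dual multipliers refer to the constraint $\mathbf{u}_{l_1}-\mathbf{u}_{l_2}-\mathbf{v}_l=\mathbf{0}$, $l\in\mathcal{E}$, in the reformulated problem: minimize $\frac12\sum_i\|\mathbf{x}_i-\mathbf{u}_i\|_2^2+\gamma\sum_{l}w_l\|\mathbf{v}_l\|$ subject to these constraints. *)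

From Stdlib Require Import Reals Lra Lia List Arith ClassicalEpsilon.
Open Scope R_scope.

(* Vectors of R^d are functions nat -> R; only coordinates k < d matter.
   All indices are 0-based. *)

Fixpoint fsum (m : nat) (f : nat -> R) : R :=
  match m with O => 0 | S m' => fsum m' f + f m' end.

Definition dot (d : nat) (u v : nat -> R) : R := fsum d (fun k => u k * v k).
Definition sqdist (d : nat) (u v : nat -> R) : R := fsum d (fun k => (u k - v k) ^ 2).

Definition is_norm (p : nat) (N : (nat -> R) -> R) : Prop :=
  (forall v w, (forall k, (k < p)%nat -> v k = w k) -> N v = N w) /\
  (forall v, 0 <= N v) /\
  (forall v, N v = 0 -> forall k, (k < p)%nat -> v k = 0) /\
  (forall c v, N (fun k => c * v k) = Rabs c * N v) /\
  (forall v w, N (fun k => v k + w k) <= N v + N w).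

Definition dual_norm (p : nat) (N : (nat -> R) -> R) (lam : nat -> R) : R :=
  epsilon (inhabits 0%R)
    (fun s => is_lub (fun t => exists v, N v <= 1 /\ t = dot p lam v) s).

Definition C_set (p : nat) (N : (nat -> R) -> R) (gamma wl : R) (lam : nat -> R) : Prop :=
  dual_norm p N lam <= gamma * wl.

Definition proj (p : nat) (C : (nat -> R) -> Prop) (y : nat -> R) : nat -> R :=
  epsilon (inhabits (fun _ : nat => 0%R))
    (fun z => C z /\ forall w, C w -> sqdist p y z <= sqdist p y w).

Definition edge (E : list (nat * nat)) (l : nat) : nat * nat := nth l E (0%nat, 0%nat).

Definition kdelta (a b : nat) : R := if Nat.eqb a b then 1 else 0.

Definition Phi (E : list (nat * nat)) (l i : nat) : R :=
  if Nat.eqb i (fst (edge E l)) then 1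
  else if Nat.eqb i (snd (edge E l)) then (-1) else 0.

Definition Lap (E : list (nat * nat)) (i j : nat) : R :=
  fsum (length E) (fun l => Phi E l i * Phi E l j).

(* A = Phi (x) I_p, (eps*p) x (n*p), with row index l*p+k and column index
   i*p+k' (vec stacks the columns u_i of U). *)
Definition Amat (p : nat) (E : list (nat * nat)) (a b : nat) : R :=
  Phi E (a / p) (b / p) * kdelta (a mod p) (b mod p).

Definition AtA (p : nat) (E : list (nat * nat)) (a b : nat) : R :=
  fsum (length E * p) (fun c => Amat p E c a * Amat p E c b).

Definition LkronI (p : nat) (E : list (nat * nat)) (a b : nat) : R :=
  Lap E (a / p) (b / p) * kdelta (a mod p) (b mod p).

Definition is_eigenvalue (d : nat) (M : nat -> nat -> R) (mu : R) : Prop :=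
  exists v : nat -> R, (exists k, (k < d)%nat /\ v k <> 0) /\
    forall i, (i < d)%nat -> fsum d (fun j => M i j * v j) = mu * v i.

Definition is_largest_eigenvalue (d : nat) (M : nat -> nat -> R) (r : R) : Prop :=
  is_eigenvalue d M r /\ forall mu, is_eigenvalue d M mu -> mu <= r.

(* Lam : nat -> nat -> R, Lam l k = k-th coordinate of lambda_l *)
Definition ama_Delta (E : list (nat * nat)) (Lam : nat -> nat -> R) (i k : nat) : R :=
  fsum (length E) (fun l => if Nat.eqb (fst (edge E l)) i then Lam l k else 0)
  - fsum (length E) (fun l => if Nat.eqb (snd (edge E l)) i then Lam l k else 0).

Definition ama_u (x : nat -> nat -> R) (E : list (nat * nat)) (Lam : nat -> nat -> R)
  (i k : nat) : R := x i k + ama_Delta E Lam i k.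

Definition ama_g (x : nat -> nat -> R) (E : list (nat * nat)) (Lam : nat -> nat -> R)
  (l k : nat) : R :=
  ama_u x E Lam (fst (edge E l)) k - ama_u x E Lam (snd (edge E l)) k.

Definition ama_step (p : nat) (N : (nat -> R) -> R) (gamma : R) (w : nat -> R)
  (x : nat -> nat -> R) (E : list (nat * nat)) (nu : R) (Lam : nat -> nat -> R)
  : nat -> nat -> R :=
  fun l => proj p (C_set p N gamma (w l)) (fun k => Lam l k - nu * ama_g x E Lam l k).

Fixpoint ama_lam (p : nat) (N : (nat -> R) -> R) (gamma : R) (w : nat -> R)
  (x : nat -> nat -> R) (E : list (nat * nat)) (nu : R) (lam0 : nat -> nat -> R)
  (m : nat) : nat -> nat -> R :=
  match m with
  | O => lam0
  | S m' => ama_step p N gamma w x E nu (ama_lam p N gamma w x E nu lam0 m')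
  end.

(* U^{m+1} = u(lambda^m) *)
Definition ama_U (p : nat) (N : (nat -> R) -> R) (gamma : R) (w : nat -> R)
  (x : nat -> nat -> R) (E : list (nat * nat)) (nu : R) (lam0 : nat -> nat -> R)
  (m : nat) : nat -> nat -> R :=
  ama_u x E (ama_lam p N gamma w x E nu lam0 m).

(* U i k = k-th coordinate of u_i *)
Definition Fgamma (p n : nat) (N : (nat -> R) -> R) (gamma : R) (w : nat -> R)
  (x : nat -> nat -> R) (E : list (nat * nat)) (U : nat -> nat -> R) : R :=
  / 2 * fsum n (fun i => sqdist p (x i) (U i))
  + gamma * fsum (length E) (fun l =>
      w l * N (fun k => U (fst (edge E l)) k - U (snd (edge E l)) k)).

Definition is_minimizer (p n : nat) (N : (nat -> R) -> R) (gamma : R) (w : nat -> R)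
  (x : nat -> nat -> R) (E : list (nat * nat)) (U : nat -> nat -> R) : Prop :=
  forall U', Fgamma p n N gamma w x E U <= Fgamma p n N gamma w x E U'.

(* Lagrangian of: min 1/2 sum ||x_i-u_i||^2 + gamma sum w_l ||v_l||
   s.t. u_{l1} - u_{l2} - v_l = 0 *)
Definition Lagrangian (p n : nat) (N : (nat -> R) -> R) (gamma : R) (w : nat -> R)
  (x : nat -> nat -> R) (E : list (nat * nat))
  (U V Lam : nat -> nat -> R) : R :=
  / 2 * fsum n (fun i => sqdist p (x i) (U i))
  + gamma * fsum (length E) (fun l => w l * N (V l))
  + fsum (length E) (fun l =>
      dot p (Lam l) (fun k => V l k - (U (fst (edge E l)) k - U (snd (edge E l)) k))).

(* Lam is an optimal dual multiplier (Lagrange multiplier): the dual function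
   inf_{U,V} Lagrangian(U,V,Lam) attains the primal optimal value
   (>= suffices, <= is weak duality). *)
Definition is_opt_dual (p n : nat) (N : (nat -> R) -> R) (gamma : R) (w : nat -> R)
  (x : nat -> nat -> R) (E : list (nat * nat)) (Lam : nat -> nat -> R) : Prop :=
  forall U0, is_minimizer p n N gamma w x E U0 ->
  forall U V, Fgamma p n N gamma w x E U0 <= Lagrangian p n N gamma w x E U V Lam.

(* The dual of  min 1/2 sum_i |x_i - u_i|^2 + gamma sum_l w_l ||u_l1 - u_l2||
   is a projected-gradient problem over the product of the dual-norm balls C_l,
   and AMA is exactly projected gradient ascent on it: with A the incidence
   operator (A U)_l = u_l1 - u_l2 and its adjoint Delta = A^t, the iterate is
   lambda <- P_C(lambda - nu A(x + Delta lambda)).  A fixed point satisfies complementary slackness,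
      which gives  F(Ustar) + 1/2 |U - Ustar|^2 <= Lagrangian(U, V, lamstar)  for
      all U, V, where Ustar = x + Delta lamstar.  This yields optimality and
      uniqueness of Ustar, optimality of lamstar, and U^m -> Ustar by continuity. *)

From Stdlib Require Import Reals Lra Lia List Arith ClassicalEpsilon ZArith.
Open Scope R_scope.

(** * Finite sums *)

Lemma fsum_ext d f g : (forall k, (k < d)%nat -> f k = g k) -> fsum d f = fsum d g.
Proof.
  induction d; simpl; intros H; auto.
  rewrite IHd by (intros; apply H; lia). rewrite H by lia. auto.
Qed.

Lemma fsum_plus d f g : fsum d (fun k => f k + g k) = fsum d f + fsum d g.
Proof. induction d; simpl; [lra|]. rewrite IHd. lra. Qed.

Lemma fsum_minus d f g : fsum d (fun k => f k - g k) = fsum d f - fsum d g.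
Proof. induction d; simpl; [lra|]. rewrite IHd. lra. Qed.

Lemma fsum_scal d c f : fsum d (fun k => c * f k) = c * fsum d f.
Proof. induction d; simpl; [lra|]. rewrite IHd. lra. Qed.

Lemma fsum_zero d : fsum d (fun _ => 0) = 0.
Proof. induction d; simpl; [lra|]. rewrite IHd. lra. Qed.

Lemma fsum_le d f g : (forall k, (k < d)%nat -> f k <= g k) -> fsum d f <= fsum d g.
Proof.
  induction d; simpl; intros H; [lra|].
  assert (f d <= g d) by (apply H; lia).
  assert (fsum d f <= fsum d g) by (apply IHd; intros; apply H; lia). lra.
Qed.

Lemma fsum_nonneg d f : (forall k, (k < d)%nat -> 0 <= f k) -> 0 <= fsum d f.
Proof. intros H. rewrite <- (fsum_zero d). apply fsum_le. auto. Qed.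

Lemma fsum_term_le d f j :
  (forall k, (k < d)%nat -> 0 <= f k) -> (j < d)%nat -> f j <= fsum d f.
Proof.
  induction d; simpl; intros H Hj; [lia|].
  assert (0 <= fsum d f) by (apply fsum_nonneg; intros; apply H; lia).
  destruct (Nat.eq_dec j d); [subst; lra|].
  assert (f j <= fsum d f) by (apply IHd; [intros; apply H; lia | lia]).
  assert (0 <= f d) by (apply H; lia). lra.
Qed.

Lemma fsum_nonneg_zero d f : (forall k, (k < d)%nat -> 0 <= f k) -> fsum d f <= 0 ->
  forall k, (k < d)%nat -> f k = 0.
Proof. intros H H0 k Hk. pose proof (fsum_term_le d f k H Hk). pose proof (H k Hk). lra. Qed.

Lemma fsum_swap a b (f : nat -> nat -> R) :
  fsum a (fun i => fsum b (fun j => f i j)) = fsum b (fun j => fsum a (fun i => f i j)).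
Proof. induction a; simpl; [rewrite fsum_zero; auto|]. rewrite IHa, <- fsum_plus. auto. Qed.

Lemma fsum_add a b f : fsum (a + b) f = fsum a f + fsum b (fun k => f (a + k)%nat).
Proof.
  induction b; simpl; [rewrite Nat.add_0_r; lra|].
  rewrite Nat.add_succ_r. simpl. rewrite IHb. lra.
Qed.

Lemma fsum_split m p f :
  fsum (m * p) f = fsum m (fun l => fsum p (fun k => f (l * p + k)%nat)).
Proof. induction m; simpl; auto. rewrite Nat.add_comm, fsum_add, IHm. auto. Qed.

Lemma kdelta_same a : kdelta a a = 1.
Proof. unfold kdelta. rewrite Nat.eqb_refl. auto. Qed.

Lemma kdelta_diff a b : a <> b -> kdelta a b = 0.
Proof. intros. unfold kdelta. destruct (Nat.eqb_spec a b); auto; lia. Qed.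

Lemma kdelta_sym a b : kdelta a b = kdelta b a.
Proof. unfold kdelta. destruct (Nat.eqb_spec a b), (Nat.eqb_spec b a); auto; lia. Qed.

Lemma fsum_delta d a f : (a < d)%nat -> fsum d (fun k => kdelta k a * f k) = f a.
Proof.
  induction d; simpl; intros H; [lia|].
  destruct (Nat.eq_dec a d).
  - subst. rewrite kdelta_same, (fsum_ext _ _ (fun _ => 0)), fsum_zero; [lra|].
    intros; rewrite kdelta_diff by lia; lra.
  - rewrite IHd, kdelta_diff by lia. lra.
Qed.

(** * Sequences and compactness *)

Lemma CV_const c : Un_cv (fun _ => c) c.
Proof.
  intros e He. exists 0%nat. intros. unfold Rdist.
  replace (c - c) with 0 by ring. rewrite Rabs_R0. auto.
Qed.

Lemma CV_fsum d (a : nat -> nat -> R) (b : nat -> R) :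
  (forall k, (k < d)%nat -> Un_cv (fun m => a m k) (b k)) ->
  Un_cv (fun m => fsum d (a m)) (fsum d b).
Proof.
  induction d; simpl; intros H; [apply CV_const|].
  apply CV_plus; [apply IHd; intros; apply H; lia | apply H; lia].
Qed.

Lemma CV_ext u v l : (forall m, u m = v m) -> Un_cv u l -> Un_cv v l.
Proof. intros H C e He. destruct (C e He) as [K HK]. exists K. intros. rewrite <- H. auto. Qed.

Lemma CV_scal c u l : Un_cv u l -> Un_cv (fun m => c * u m) (c * l).
Proof. intros. apply CV_mult; auto. apply CV_const. Qed.

Lemma CV_shift u l : Un_cv (fun m => u (S m)) l -> Un_cv u l.
Proof. intros C e He. destruct (C e He) as [K HK]. exists (S K). intros [|m] Hm; [lia|]. apply HK. lia. Qed.

Lemma Rabs_squeeze (a b : nat -> R) l :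
  (forall m, Rabs (a m - l) <= b m) -> Un_cv b 0 -> Un_cv a l.
Proof.
  intros H C e He. destruct (C e He) as [K HK]. exists K. intros m Hm.
  specialize (HK m Hm). unfold Rdist in *. specialize (H m).
  rewrite Rminus_0_r in HK. pose proof (Rle_abs (b m)). lra.
Qed.

Lemma CV_abs0 u l : Un_cv u l -> Un_cv (fun m => Rabs (u m - l)) 0.
Proof.
  intros C e He. destruct (C e He) as [K HK]. exists K. intros. unfold Rdist in *.
  rewrite Rminus_0_r, Rabs_Rabsolu. auto.
Qed.

Lemma CV_le_const u l c : Un_cv u l -> (forall m, u m <= c) -> l <= c.
Proof.
  intros C H. destruct (Rle_dec l c); auto. exfalso.
  destruct (C (l - c)) as [K HK]; [lra|]. specialize (HK K (le_n _)). specialize (H K).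
  unfold Rdist in HK. apply Rabs_def2 in HK. lra.
Qed.

Lemma CV_ge_const u l c : Un_cv u l -> (forall m, c <= u m) -> c <= l.
Proof.
  intros C H. destruct (Rle_dec c l); auto. exfalso.
  destruct (C (c - l)) as [K HK]; [lra|]. specialize (HK K (le_n _)). specialize (H K).
  unfold Rdist in HK. apply Rabs_def2 in HK. lra.
Qed.

Lemma arch_inv e : 0 < e -> exists K, forall m, (K <= m)%nat -> / (INR m + 1) < e.
Proof.
  intros He. destruct (archimed (/ e)) as [Ha _].
  assert (Hz : (0 <= up (/ e))%Z).
  { apply le_IZR. pose proof (Rinv_0_lt_compat e He). lra. }
  exists (Z.to_nat (up (/ e))). intros m Hm.
  assert (INR (Z.to_nat (up (/ e))) <= INR m) by (apply le_INR; auto).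
  rewrite INR_IZR_INZ, Z2Nat.id in H by auto.
  rewrite <- (Rinv_inv e). apply Rinv_lt_contravar; [|lra].
  pose proof (pos_INR m). apply Rmult_lt_0_compat; [apply Rinv_0_lt_compat; auto | lra].
Qed.

Lemma inv_succ_cv0 : Un_cv (fun m => / (INR m + 1)) 0.
Proof.
  intros e He. destruct (arch_inv e He) as [K HK]. exists K. intros m Hm. unfold Rdist.
  pose proof (pos_INR m). rewrite Rminus_0_r, Rabs_pos_eq; [auto|].
  left. apply Rinv_0_lt_compat. lra.
Qed.

Definition strictly_increasing (phi : nat -> nat) : Prop := forall m, (phi m < phi (S m))%nat.

Lemma incr_ge phi : strictly_increasing phi -> forall m, (m <= phi m)%nat.
Proof. intros H m. induction m; [lia|]. specialize (H m). lia. Qed.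

Lemma incr_mono phi : strictly_increasing phi -> forall a b, (a <= b)%nat -> (phi a <= phi b)%nat.
Proof. intros H a b Hab. induction Hab; [lia|]. specialize (H m). lia. Qed.

Lemma CV_subseq u l phi : strictly_increasing phi -> Un_cv u l -> Un_cv (fun m => u (phi m)) l.
Proof.
  intros Hp C e He. destruct (C e He) as [K HK]. exists K. intros m Hm.
  apply HK. pose proof (incr_ge phi Hp m). lia.
Qed.

Lemma bolzano_weierstrass_1 (u : nat -> R) (B : R) : (forall m, Rabs (u m) <= B) ->
  exists phi, strictly_increasing phi /\ exists l, Un_cv (fun m => u (phi m)) l.
Proof.
  intros Hb.
  destruct (Bolzano_Weierstrass u (fun c => -B <= c <= B)) as [l Hl].
  { apply compact_P3. }
  { intros m. specialize (Hb m). unfold Rabs in Hb. destruct (Rcase_abs (u m)); lra. }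
  (* l is a cluster value: every tail of u visits every ball around l *)
  assert (Hvisit : forall K m : nat, exists q, (K <= q)%nat /\ Rabs (u q - l) < / (INR m + 1)).
  { intros K m.
    assert (Hr : 0 < / (INR m + 1)) by (apply Rinv_0_lt_compat; pose proof (pos_INR m); lra).
    destruct (Hl (fun y => Rabs (y - l) < / (INR m + 1)) K) as [q Hq].
    - exists (mkposreal _ Hr). intros y Hy. unfold disc in Hy. simpl in Hy. auto.
    - exists q; auto. }
  pose (pick K m := proj1_sig (constructive_indefinite_description _ (Hvisit K m))).
  assert (Hpick : forall K m, (K <= pick K m)%nat /\ Rabs (u (pick K m) - l) < / (INR m + 1)).
  { intros. unfold pick. destruct (constructive_indefinite_description _ _). auto. }
  pose (phi := fix phi (m : nat) : nat :=
          match m with O => pick O O | S m' => pick (S (phi m')) (S m') end).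
  exists phi. split.
  - intros m. simpl. destruct (Hpick (S (phi m)) (S m)). lia.
  - exists l. apply (Rabs_squeeze _ (fun m => / (INR m + 1))); [|apply inv_succ_cv0].
    intros m. left. destruct m; apply Hpick.
Qed.

Lemma bolzano_weierstrass d (u : nat -> nat -> R) (B : nat -> R) :
  (forall m j, (j < d)%nat -> Rabs (u m j) <= B j) ->
  exists phi, strictly_increasing phi /\
    exists v : nat -> R, forall j, (j < d)%nat -> Un_cv (fun m => u (phi m) j) (v j).
Proof.
  induction d; intros Hb.
  - exists (fun m => m). split; [intros m; lia|]. exists (fun _ => 0). intros; lia.
  - destruct IHd as [phi1 [Hphi1 [v1 Hv1]]]; [intros; apply Hb; lia|].
    destruct (bolzano_weierstrass_1 (fun m => u (phi1 m) d) (B d)) as [phi2 [Hphi2 [l Hl]]].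
    { intros; apply Hb; lia. }
    exists (fun m => phi1 (phi2 m)). split.
    + intros m. pose proof (incr_mono phi1 Hphi1 (S (phi2 m)) (phi2 (S m)) (Hphi2 m)).
      specialize (Hphi1 (phi2 m)). lia.
    + exists (fun j => if Nat.eqb j d then l else v1 j). intros j Hj.
      destruct (Nat.eqb_spec j d); [subst; auto|].
      apply (CV_subseq (fun m => u (phi1 m) j)); auto. apply Hv1. lia.
Qed.

Lemma maximizing_sequence (S : (nat -> R) -> Prop) (f : (nat -> R) -> R) (B : R) :
  (exists v, S v) -> (forall v, S v -> f v <= B) ->
  exists (M : R) (ws : nat -> nat -> R), (forall v, S v -> f v <= M) /\
    forall m, S (ws m) /\ M - / (INR m + 1) < f (ws m).
Proof.
  intros [v0 Hv0] Hub.
  destruct (completeness (fun t => exists v, S v /\ t = f v)) as [M [HM1 HM2]].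
  { exists B. intros t [v [Hv ->]]. auto. }
  { exists (f v0). eauto. }
  assert (H : forall m : nat, exists v, S v /\ M - / (INR m + 1) < f v).
  { intros m. apply NNPP. intros Hn.
    assert (0 < / (INR m + 1)) by (apply Rinv_0_lt_compat; pose proof (pos_INR m); lra).
    assert (M <= M - / (INR m + 1)); [|lra].
    apply HM2. intros t [v [Hv ->]].
    destruct (Rle_dec (f v) (M - / (INR m + 1))); auto. exfalso; apply Hn. exists v. split; auto. lra. }
  exists M, (fun m => proj1_sig (constructive_indefinite_description _ (H m))). split.
  - intros v Hv. apply HM1. eauto.
  - intros m. destruct (constructive_indefinite_description _ _). auto.
Qed.

(* Weierstrass: a continuous function, bounded above on a nonempty, bounded and
   closed set of R^d, attains its maximum there. Closedness and continuity are
   stated together, sequentially. *)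
Lemma max_attained d (S : (nat -> R) -> Prop) (f : (nat -> R) -> R) (Rb : nat -> R) (B : R) :
  (exists v, S v) ->
  (forall v, S v -> forall k, (k < d)%nat -> Rabs (v k) <= Rb k) ->
  (forall (vs : nat -> nat -> R) v, (forall m, S (vs m)) ->
     (forall k, (k < d)%nat -> Un_cv (fun m => vs m k) (v k)) ->
     S v /\ Un_cv (fun m => f (vs m)) (f v)) ->
  (forall v, S v -> f v <= B) ->
  exists z, S z /\ forall w, S w -> f w <= f z.
Proof.
  intros Hne Hb Hcl Hub.
  destruct (maximizing_sequence S f B Hne Hub) as [M [ws [HM Hws]]].
  destruct (bolzano_weierstrass d ws Rb) as [phi [Hphi [v Hv]]].
  { intros m; apply Hb, Hws. }
  destruct (Hcl (fun m => ws (phi m)) v) as [HSv Hfv]; [intros; apply Hws | auto |].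
  exists v. split; auto. intros w Hw. eapply Rle_trans; [apply HM, Hw|].
  (* f (ws (phi m)) + 1/(m+1) >= M passes to the limit *)
  apply (CV_ge_const (fun m => f (ws (phi m)) + / (INR m + 1))).
  - rewrite <- (Rplus_0_r (f v)). apply CV_plus; [auto | apply inv_succ_cv0].
  - intros m. destruct (Hws (phi m)) as [_ Hlt].
    assert (/ (INR (phi m) + 1) <= / (INR m + 1)); [|lra].
    apply Rinv_le_contravar; [pose proof (pos_INR m); lra|].
    apply Rplus_le_compat_r, le_INR, incr_ge; auto.
Qed.

(** * Euclidean geometry of R^d *)

Definition sq (d : nat) (v : nat -> R) : R := fsum d (fun k => v k ^ 2).

Lemma sq_nonneg d v : 0 <= sq d v.
Proof. apply fsum_nonneg. intros; apply pow2_ge_0. Qed.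

Lemma coord_le_sqrt d v k : (k < d)%nat -> Rabs (v k) <= sqrt (sq d v).
Proof.
  intros Hk. rewrite <- sqrt_Rsqr_abs. apply sqrt_le_1_alt. rewrite Rsqr_pow2.
  apply (fsum_term_le d (fun k => v k ^ 2)); auto. intros; apply pow2_ge_0.
Qed.

Lemma sq_zero d v : sq d v <= 0 -> forall k, (k < d)%nat -> v k = 0.
Proof.
  intros H k Hk.
  pose proof (fsum_nonneg_zero d (fun k => v k ^ 2) (fun k _ => pow2_ge_0 (v k)) H k Hk).
  simpl in H0. nra.
Qed.

Lemma sq_normalize d v : 0 < sq d v -> sq d (fun k => / sqrt (sq d v) * v k) = 1.
Proof.
  intros H. set (s := sqrt (sq d v)).
  assert (Hs : 0 < s) by (apply sqrt_lt_R0; lra).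
  assert (Hss : s * s = sq d v) by (apply sqrt_sqrt; lra).
  unfold sq. rewrite (fsum_ext _ _ (fun k => (/ s) ^ 2 * v k ^ 2)) by (intros; ring).
  rewrite fsum_scal. fold (sq d v). rewrite <- Hss. field. lra.
Qed.

Lemma CV_sq d (vs : nat -> nat -> R) v :
  (forall k, (k < d)%nat -> Un_cv (fun m => vs m k) (v k)) ->
  Un_cv (fun m => sq d (vs m)) (sq d v).
Proof.
  intros. apply (CV_fsum d (fun m k => vs m k ^ 2)). intros. simpl.
  apply CV_mult; auto. apply CV_mult; auto. apply CV_const.
Qed.

Lemma CV_dot d (vs ws : nat -> nat -> R) v w :
  (forall k, (k < d)%nat -> Un_cv (fun m => vs m k) (v k)) ->
  (forall k, (k < d)%nat -> Un_cv (fun m => ws m k) (w k)) ->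
  Un_cv (fun m => dot d (vs m) (ws m)) (dot d v w).
Proof. intros. apply (CV_fsum d (fun m k => vs m k * ws m k)). intros. apply CV_mult; auto. Qed.

Lemma dot_sym d a b : dot d a b = dot d b a.
Proof. unfold dot. apply fsum_ext; intros; lra. Qed.

Lemma dot_ext d a b a' b' : (forall k, (k < d)%nat -> a k = a' k) ->
  (forall k, (k < d)%nat -> b k = b' k) -> dot d a b = dot d a' b'.
Proof. intros. unfold dot. apply fsum_ext; intros. rewrite H, H0 by auto. auto. Qed.

Lemma dot_self d a : dot d a a = sq d a.
Proof. unfold dot, sq. apply fsum_ext; intros; simpl; lra. Qed.

Lemma dot_zero_l d b : dot d (fun _ => 0) b = 0.
Proof. unfold dot. rewrite (fsum_ext _ _ (fun _ => 0)) by (intros; lra). apply fsum_zero. Qed.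

Lemma dot_scal_l d c a b : dot d (fun k => c * a k) b = c * dot d a b.
Proof. unfold dot. rewrite <- fsum_scal. apply fsum_ext; intros; lra. Qed.

Lemma dot_scal_r d c a b : dot d a (fun k => c * b k) = c * dot d a b.
Proof. unfold dot. rewrite <- fsum_scal. apply fsum_ext; intros; lra. Qed.

Lemma dot_minus_r d a b b' : dot d a (fun k => b k - b' k) = dot d a b - dot d a b'.
Proof. unfold dot. rewrite <- fsum_minus. apply fsum_ext; intros; lra. Qed.

Lemma dot_plus_r d a b b' : dot d a (fun k => b k + b' k) = dot d a b + dot d a b'.
Proof. unfold dot. rewrite <- fsum_plus. apply fsum_ext; intros; lra. Qed.

Lemma dot_opp_r d a b : dot d a (fun k => - b k) = - dot d a b.
Proof.
  replace (- dot d a b) with (-1 * dot d a b) by ring. rewrite <- dot_scal_r.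
  apply dot_ext; intros; lra.
Qed.

Lemma sq_comb d a b s :
  sq d (fun k => a k - s * b k) = sq d a - 2 * s * dot d a b + s ^ 2 * sq d b.
Proof.
  unfold sq, dot. rewrite <- !fsum_scal, <- fsum_minus, <- fsum_plus.
  apply fsum_ext; intros; ring.
Qed.

Lemma cauchy_schwarz d a b : (dot d a b) ^ 2 <= sq d a * sq d b.
Proof.
  pose proof (sq_nonneg d b). destruct (Req_dec (sq d b) 0) as [H0|H0].
  - rewrite (dot_ext d a b a (fun _ => 0)) by (auto; apply sq_zero; lra).
    rewrite dot_sym, dot_zero_l, H0. lra.
  - (* expand |a - t b|^2 >= 0 at t = <a,b>/|b|^2 *)
    pose proof (sq_nonneg d (fun k => a k - (dot d a b / sq d b) * b k)) as Hexp.
    rewrite sq_comb in Hexp.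
    assert (sq d a * sq d b - dot d a b ^ 2 =
      sq d b * (sq d a - 2 * (dot d a b / sq d b) * dot d a b
                + (dot d a b / sq d b) ^ 2 * sq d b)) by (field; auto).
    nra.
Qed.

(** * Norms on R^p *)

Section Norm.

Variables (p : nat) (N : (nat -> R) -> R).
Hypothesis HN : is_norm p N.

Lemma N_ext v w : (forall k, (k < p)%nat -> v k = w k) -> N v = N w.
Proof. apply HN. Qed.

Lemma N_nonneg v : 0 <= N v.
Proof. apply HN. Qed.

Lemma N_def v : N v = 0 -> forall k, (k < p)%nat -> v k = 0.
Proof. apply HN. Qed.

Lemma N_hom c v : N (fun k => c * v k) = Rabs c * N v.
Proof. apply HN. Qed.

Lemma N_tri v w : N (fun k => v k + w k) <= N v + N w.
Proof. apply HN. Qed.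

Lemma N_zero : N (fun _ => 0) = 0.
Proof.
  rewrite (N_ext _ (fun k => 0 * (fun _ => 0) k)) by (intros; lra).
  rewrite N_hom, Rabs_R0. lra.
Qed.

Lemma N_opp v : N (fun k => - v k) = N v.
Proof.
  rewrite (N_ext _ (fun k => -1 * v k)) by (intros; lra).
  rewrite N_hom, Rabs_left by lra. lra.
Qed.

Lemma N_scal_pos c v : 0 <= c -> N (fun k => c * v k) = c * N v.
Proof. intros. rewrite N_hom, Rabs_pos_eq; auto. Qed.

Definition evec (k : nat) : nat -> R := fun j => kdelta j k.
Definition basis_norm_sum : R := fsum p (fun k => N (evec k)).

Lemma N_upper_abs v : N v <= fsum p (fun k => Rabs (v k) * N (evec k)).
Proof.
  assert (Hsum : forall d, N (fun j => fsum d (fun k => v k * evec k j))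
                           <= fsum d (fun k => Rabs (v k) * N (evec k))).
  { induction d; simpl; [rewrite N_zero; lra|].
    eapply Rle_trans; [apply (N_tri _ (fun j => v d * evec d j))|]. rewrite N_hom. lra. }
  rewrite (N_ext v (fun j => fsum p (fun k => v k * evec k j))); [apply Hsum|].
  intros j Hj. unfold evec. rewrite (fsum_ext _ _ (fun k => kdelta k j * v k)).
  - rewrite fsum_delta; auto.
  - intros; rewrite kdelta_sym; lra.
Qed.

Lemma N_upper v : N v <= basis_norm_sum * sqrt (sq p v).
Proof.
  eapply Rle_trans; [apply N_upper_abs|]. unfold basis_norm_sum.
  rewrite Rmult_comm, <- fsum_scal. apply fsum_le. intros.
  apply Rmult_le_compat_r; [apply N_nonneg | apply coord_le_sqrt; auto].
Qed.

(* the norm is continuous (indeed Lipschitz) in the coordinates *)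
Lemma CV_N (vs : nat -> nat -> R) v :
  (forall k, (k < p)%nat -> Un_cv (fun m => vs m k) (v k)) -> Un_cv (fun m => N (vs m)) (N v).
Proof.
  intros H.
  assert (Hlip : forall a b, N a <= N b + fsum p (fun k => Rabs (a k - b k) * N (evec k))).
  { intros a b. rewrite (N_ext a (fun k => (a k - b k) + b k)) by (intros; lra).
    pose proof (N_upper_abs (fun k => a k - b k)). pose proof (N_tri (fun k => a k - b k) b). lra. }
  apply (Rabs_squeeze _ (fun m => fsum p (fun k => Rabs (vs m k - v k) * N (evec k)))).
  - intros m. pose proof (Hlip (vs m) v). pose proof (Hlip v (vs m)).
    rewrite (fsum_ext p (fun k => Rabs (v k - vs m k) * N (evec k))
               (fun k => Rabs (vs m k - v k) * N (evec k))) in H1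
      by (intros; rewrite Rabs_minus_sym; auto).
    unfold Rabs at 1. destruct (Rcase_abs _); lra.
  - rewrite <- (fsum_zero p).
    apply (CV_fsum p (fun m k => Rabs (vs m k - v k) * N (evec k)) (fun _ => 0)).
    intros. rewrite <- (Rmult_0_l (N (evec k))). apply CV_mult; [apply CV_abs0; auto | apply CV_const].
Qed.

(* Equivalence with the Euclidean norm: ||v|| >= c |v|_2 for some c > 0, with c
   the minimum of N on the Euclidean unit sphere. *)
Lemma N_lower : (0 < p)%nat -> exists c, 0 < c /\ forall v, c * sqrt (sq p v) <= N v.
Proof.
  intros Hp.
  destruct (max_attained p (fun v => sq p v = 1) (fun v => - N v) (fun _ => 1) 0) as [z [Hz Hmin]].
  - exists (evec 0). unfold sq, evec.
    rewrite (fsum_ext _ _ (fun k => kdelta k 0 * 1)); [apply fsum_delta; auto|].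
    intros. unfold kdelta. destruct (Nat.eqb k 0); lra.
  - intros v Hv k Hk. pose proof (coord_le_sqrt p v k Hk). rewrite Hv, sqrt_1 in H. auto.
  - intros vs v Hvs Hc. split.
    + apply (UL_sequence (fun m => sq p (vs m))); [apply CV_sq; auto|].
      apply (CV_ext (fun _ => 1)); [intros; rewrite Hvs; auto | apply CV_const].
    + apply CV_opp, CV_N; auto.
  - intros. pose proof (N_nonneg v). lra.
  - assert (Hpos : 0 < N z).
    { destruct (N_nonneg z) as [|H]; auto. exfalso.
      assert (sq p z = 0); [|lra].
      unfold sq. rewrite (fsum_ext _ _ (fun _ => 0)); [apply fsum_zero|].
      intros. rewrite (N_def z (eq_sym H)); auto. ring. }
    exists (N z). split; auto. intros v.
    destruct (Req_dec (sq p v) 0) as [H0|H0].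
    + rewrite H0, sqrt_0. pose proof (N_nonneg v). lra.
    + pose proof (sq_nonneg p v). set (s := sqrt (sq p v)).
      assert (Hs : 0 < s) by (apply sqrt_lt_R0; lra).
      specialize (Hmin _ (sq_normalize p v ltac:(lra))). simpl in Hmin. fold s in Hmin.
      rewrite N_scal_pos in Hmin by (left; apply Rinv_0_lt_compat; auto).
      apply (Rmult_le_reg_l (/ s)); [apply Rinv_0_lt_compat; auto|].
      replace (/ s * (N z * s)) with (N z) by (field; lra). lra.
Qed.

End Norm.

(** * Euclidean projection onto closed convex sets *)

Definition is_proj p (S : (nat -> R) -> Prop) (y z : nat -> R) : Prop :=
  S z /\ forall w, S w -> sqdist p y z <= sqdist p y w.

Definition convex_set (S : (nat -> R) -> Prop) : Prop :=
  forall a b s, S a -> S b -> 0 <= s <= 1 -> S (fun k => s * a k + (1 - s) * b k).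

Lemma proj_exists p (S : (nat -> R) -> Prop) (Rb : nat -> R) y :
  (exists v, S v) ->
  (forall v, S v -> forall k, (k < p)%nat -> Rabs (v k) <= Rb k) ->
  (forall (vs : nat -> nat -> R) v, (forall m, S (vs m)) ->
     (forall k, (k < p)%nat -> Un_cv (fun m => vs m k) (v k)) -> S v) ->
  exists z, is_proj p S y z.
Proof.
  intros Hne Hb Hcl.
  destruct (max_attained p S (fun v => - sqdist p y v) Rb 0) as [z [Hz Hmin]]; auto.
  - intros vs v Hvs Hc. split; [eapply Hcl; eauto|].
    apply CV_opp, (CV_sq p (fun m k => y k - vs m k)).
    intros. apply CV_minus; auto. apply CV_const.
  - intros. pose proof (sq_nonneg p (fun k => y k - v k)). unfold sqdist, sq in *. lra.
  - exists z. split; auto. intros v Hv. specialize (Hmin v Hv). lra.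
Qed.

Lemma proj_spec p S y : (exists z, is_proj p S y z) -> is_proj p S y (proj p S y).
Proof. intros H. unfold proj. apply epsilon_spec. auto. Qed.

Lemma proj_VI p (S : (nat -> R) -> Prop) y z : convex_set S ->
  is_proj p S y z -> forall b, S b -> dot p (fun k => y k - z k) (fun k => b k - z k) <= 0.
Proof.
  intros Hconv [Hz Hmin] b Hb.
  set (D := dot p (fun k => y k - z k) (fun k => b k - z k)).
  set (Q := sq p (fun k => b k - z k)).
  (* moving from z towards b by s does not decrease the distance to y *)
  assert (Hs : forall s, 0 < s <= 1 -> 2 * D <= s * Q).
  { intros s Hs. specialize (Hmin _ (Hconv b z s Hb Hz ltac:(lra))).
    assert (E1 : sqdist p y (fun k => s * b k + (1 - s) * z k)
                 = sq p (fun k => (y k - z k) - s * (b k - z k)))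
      by (unfold sqdist, sq; apply fsum_ext; intros; ring).
    rewrite E1, sq_comb in Hmin. unfold sqdist in Hmin. fold (sq p (fun k => y k - z k)) in Hmin.
    fold D Q in Hmin. nra. }
  assert (0 <= Q) by apply sq_nonneg.
  destruct (Rle_dec D 0); auto. exfalso.
  destruct (Req_dec Q 0); [specialize (Hs 1 ltac:(lra)); lra|].
  destruct (Rle_dec (D / Q) 1) as [HDQ|HDQ].
  - assert (0 < D / Q) by (apply Rdiv_lt_0_compat; lra).
    specialize (Hs (D / Q) ltac:(lra)). replace (D / Q * Q) with D in Hs by (field; auto). lra.
  - specialize (Hs 1 ltac:(lra)).
    apply Rnot_le_lt in HDQ. apply (Rmult_lt_compat_r Q) in HDQ; [|lra].
    replace (D / Q * Q) with D in HDQ by (field; auto). lra.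
Qed.

Lemma proj_nonexp p (S : (nat -> R) -> Prop) y1 y2 z1 z2 : convex_set S ->
  is_proj p S y1 z1 -> is_proj p S y2 z2 ->
  sq p (fun k => z1 k - z2 k) <= sq p (fun k => y1 k - y2 k).
Proof.
  intros Hc H1 H2.
  pose proof (proj_VI p S y1 z1 Hc H1 z2 (proj1 H2)).
  pose proof (proj_VI p S y2 z2 Hc H2 z1 (proj1 H1)). unfold dot in *.
  assert (fsum p (fun k => (z1 k - z2 k) ^ 2 - (y1 k - y2 k) ^ 2) <=
          fsum p (fun k => 2 * ((y1 k - z1 k) * (z2 k - z1 k) + (y2 k - z2 k) * (z1 k - z2 k)))).
  { apply fsum_le. intros. pose proof (pow2_ge_0 ((y1 k - y2 k) - (z1 k - z2 k))). nra. }
  rewrite fsum_minus, fsum_scal, fsum_plus in H3. unfold sq. lra.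
Qed.

(** * The dual norm *)

Section DualNorm.

Variables (p : nat) (N : (nat -> R) -> R).
Hypotheses (HN : is_norm p N) (Hp : (0 < p)%nat).

Lemma dual_norm_lub lam : is_lub (fun t => exists v, N v <= 1 /\ t = dot p lam v) (dual_norm p N lam).
Proof.
  unfold dual_norm. apply epsilon_spec.
  destruct (N_lower p N HN Hp) as [c [Hc Hlow]].
  refine (let (m, Hm) := completeness _ _ _ in ex_intro _ m Hm).
  - (* the unit ball of N lies in the box |v_k| <= 1/c *)
    exists (fsum p (fun k => Rabs (lam k) * / c)). intros t [v [Hv ->]].
    apply fsum_le. intros k Hk.
    assert (Rabs (v k) <= / c).
    { pose proof (coord_le_sqrt p v k Hk). specialize (Hlow v).
      apply (Rmult_le_reg_l c); auto. rewrite Rinv_r by lra. nra. }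
    eapply Rle_trans; [apply Rle_abs|]. rewrite Rabs_mult.
    apply Rmult_le_compat_l; [apply Rabs_pos | auto].
  - exists 0, (fun _ => 0). split; [rewrite (N_zero p N HN); lra|].
    rewrite dot_sym, dot_zero_l. auto.
Qed.

Lemma dual_norm_nonneg lam : 0 <= dual_norm p N lam.
Proof.
  apply dual_norm_lub. exists (fun _ => 0). split; [rewrite (N_zero p N HN); lra|].
  rewrite dot_sym, dot_zero_l. auto.
Qed.

Lemma dual_norm_le lam r : (forall v, N v <= 1 -> dot p lam v <= r) -> dual_norm p N lam <= r.
Proof. intros H. apply dual_norm_lub. intros t [v [Hv ->]]. auto. Qed.

Lemma holder lam v : dot p lam v <= dual_norm p N lam * N v.
Proof.
  destruct (N_nonneg p N HN v) as [Hv|Hv].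
  - assert (dot p lam (fun k => / N v * v k) <= dual_norm p N lam).
    { apply dual_norm_lub. eexists; split; [|reflexivity].
      rewrite (N_scal_pos p N HN) by (left; apply Rinv_0_lt_compat; auto).
      rewrite Rinv_l by lra. lra. }
    rewrite dot_scal_r in H. apply (Rmult_le_compat_r (N v)) in H; [|lra].
    replace (/ N v * dot p lam v * N v) with (dot p lam v) in H by (field; lra). lra.
  - rewrite (dot_ext p lam v lam (fun _ => 0)) by (auto; apply (N_def p N HN); auto).
    rewrite dot_sym, dot_zero_l, <- Hv. lra.
Qed.

Lemma dual_norm_ext a b : (forall k, (k < p)%nat -> a k = b k) -> dual_norm p N a = dual_norm p N b.
Proof.
  assert (Hle : forall a b, (forall k, (k < p)%nat -> a k = b k) -> dual_norm p N a <= dual_norm p N b).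
  { intros a' b' H. apply dual_norm_le. intros v Hv.
    rewrite (dot_ext p a' v b' v) by auto. eapply Rle_trans; [apply holder|].
    pose proof (dual_norm_nonneg b'). nra. }
  intros H. apply Rle_antisym; apply Hle; auto. intros; symmetry; auto.
Qed.

Lemma dual_norm_convex a b s : 0 <= s <= 1 ->
  dual_norm p N (fun k => s * a k + (1 - s) * b k) <= s * dual_norm p N a + (1 - s) * dual_norm p N b.
Proof.
  intros Hs. apply dual_norm_le. intros v Hv.
  replace (dot p (fun k => s * a k + (1 - s) * b k) v) with (s * dot p a v + (1 - s) * dot p b v)
    by (unfold dot; rewrite <- !fsum_scal, <- fsum_plus; apply fsum_ext; intros; ring).
  pose proof (holder a v). pose proof (holder b v).
  pose proof (dual_norm_nonneg a). pose proof (dual_norm_nonneg b).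
  assert (dot p a v <= dual_norm p N a) by nra. assert (dot p b v <= dual_norm p N b) by nra.
  apply Rplus_le_compat; apply Rmult_le_compat_l; lra.
Qed.

Lemma dual_norm_closed (vs : nat -> nat -> R) v r :
  (forall m, dual_norm p N (vs m) <= r) ->
  (forall k, (k < p)%nat -> Un_cv (fun m => vs m k) (v k)) -> dual_norm p N v <= r.
Proof.
  intros H Hc. apply dual_norm_le. intros u Hu.
  apply (CV_le_const (fun m => dot p (vs m) u)); [apply CV_dot; auto; intros; apply CV_const|].
  intros m. eapply Rle_trans; [apply holder|].
  pose proof (dual_norm_nonneg (vs m)). pose proof (N_nonneg p N HN u). specialize (H m). nra.
Qed.

Lemma dual_norm_coord lam r : dual_norm p N lam <= r ->
  forall k, (k < p)%nat -> Rabs (lam k) <= r * basis_norm_sum p N.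
Proof.
  intros H k Hk. eapply Rle_trans; [apply (coord_le_sqrt p lam k Hk)|].
  set (s := sqrt (sq p lam)).
  assert (Hss : s * s = sq p lam) by (apply sqrt_sqrt, sq_nonneg).
  assert (Hs0 : 0 <= s) by apply sqrt_pos.
  (* |lam|^2 = <lam, lam> <= ||lam||_dagger ||lam|| <= r M |lam| *)
  pose proof (holder lam lam) as Hh. rewrite dot_self in Hh.
  pose proof (N_upper p N HN lam) as Hup. fold s in Hup.
  pose proof (dual_norm_nonneg lam) as Hd.
  assert (HM : 0 <= basis_norm_sum p N) by (apply fsum_nonneg; intros; apply (N_nonneg p N HN)).
  destruct Hs0 as [Hs|Hs]; [|rewrite <- Hs; nra].
  assert (s * s <= r * basis_norm_sum p N * s); [|nra].
  rewrite Hss. eapply Rle_trans; [apply Hh|].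
  apply (Rle_trans _ (dual_norm p N lam * (basis_norm_sum p N * s))); [apply Rmult_le_compat_l; auto|].
  rewrite <- Rmult_assoc. apply Rmult_le_compat_r; [lra|]. apply Rmult_le_compat_r; lra.
Qed.

Lemma unit_ball_convex : convex_set (fun v => N v <= 1).
Proof.
  intros a b s Ha Hb Hs. eapply Rle_trans; [apply (N_tri p N HN (fun k => s * a k) (fun k => (1 - s) * b k))|].
  rewrite !(N_scal_pos p N HN) by lra. nra.
Qed.

(* Separation of a point y outside the unit ball: with z its projection on the
   ball and d = y - z, the functional <d, .> is at most sig := <d, z> > 0 on the
   ball, and <d, y> = sig + |d|^2. *)
Lemma unit_ball_separation y : 1 < N y ->
  exists d sig, 0 < sig /\ 0 < sq p d /\ (forall b, N b <= 1 -> dot p d b <= sig) /\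
    dot p d y = sig + sq p d.
Proof.
  intros Hy.
  destruct (N_lower p N HN Hp) as [c [Hc Hlow]].
  destruct (proj_exists p (fun v => N v <= 1) (fun _ => / c) y) as [z Hz].
  { exists (fun _ => 0). rewrite (N_zero p N HN). lra. }
  { intros v Hv k Hk. pose proof (coord_le_sqrt p v k Hk). specialize (Hlow v).
    apply (Rmult_le_reg_l c); auto. rewrite Rinv_r by lra. nra. }
  { intros vs v Hvs Hcv. apply (CV_le_const (fun m => N (vs m))); auto. apply (CV_N p N HN); auto. }
  pose proof (proj_VI p _ y z unit_ball_convex Hz) as VI.
  set (d := fun k => y k - z k) in *. set (sig := dot p d z).
  assert (Hdb : forall b, N b <= 1 -> dot p d b <= sig).
  { intros b Hb. specialize (VI b Hb). rewrite dot_minus_r in VI. unfold sig. lra. }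
  assert (HNd : 0 < N d).
  { destruct (N_nonneg p N HN d) as [|H]; auto. exfalso.
    assert (N y = N z); [|destruct Hz; lra].
    apply (N_ext p N HN). intros k Hk. pose proof (N_def p N HN d (eq_sym H) k Hk). unfold d in H0. lra. }
  exists d, sig. repeat split; auto.
  - specialize (Hdb (fun k => / N d * d k)). rewrite dot_scal_r, dot_self in Hdb.
    rewrite (N_scal_pos p N HN), Rinv_l in Hdb by (try left; try apply Rinv_0_lt_compat; lra).
    assert (0 < sq p d); [|pose proof (Rinv_0_lt_compat _ HNd); nra].
    destruct (sq_nonneg p d) as [|H]; auto. exfalso.
    rewrite (N_ext p N HN d (fun _ => 0)), (N_zero p N HN) in HNd by (apply sq_zero; lra). lra.
  - destruct (sq_nonneg p d) as [|H]; auto. exfalso.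
    rewrite (N_ext p N HN d (fun _ => 0)), (N_zero p N HN) in HNd by (apply sq_zero; lra). lra.
  - rewrite <- dot_self. unfold sig. rewrite <- dot_plus_r. apply dot_ext; auto. intros; unfold d; ring.
Qed.

Lemma bidual h t : 0 < N h -> 1 < t ->
  exists mu, dual_norm p N mu <= 1 /\ N h / t < dot p mu h.
Proof.
  intros Hh Ht.
  set (y := fun k => (t / N h) * h k).
  assert (HNy : N y = t).
  { unfold y. rewrite (N_scal_pos p N HN) by (apply Rlt_le, Rdiv_lt_0_compat; lra). field. lra. }
  destruct (unit_ball_separation y ltac:(lra)) as [d [sig [Hsig [Hd [Hdb Hdy]]]]].
  exists (fun k => / sig * d k). split.
  - apply dual_norm_le. intros v Hv. rewrite dot_scal_l. specialize (Hdb v Hv).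
    apply (Rmult_le_reg_l sig); auto. rewrite <- Rmult_assoc, Rinv_r by lra. lra.
  - rewrite dot_scal_l.
    assert (Hdh : dot p d h = N h / t * (sig + sq p d)).
    { rewrite <- Hdy. unfold y. rewrite dot_scal_r. field. lra. }
    rewrite Hdh. assert (0 < N h / t) by (apply Rdiv_lt_0_compat; lra).
    apply (Rmult_lt_reg_l sig); auto.
    replace (sig * (/ sig * (N h / t * (sig + sq p d)))) with (N h / t * (sig + sq p d)) by (field; lra).
    nra.
Qed.

Lemma dual_sup h r D : 0 <= r ->
  (forall mu, dual_norm p N mu <= r -> dot p mu h <= D) -> r * N h <= D.
Proof.
  intros Hr H.
  assert (HD : 0 <= D).
  { specialize (H (fun _ => 0)). rewrite dot_zero_l in H. apply H.
    apply dual_norm_le. intros. rewrite dot_zero_l. lra. }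
  pose proof (N_nonneg p N HN h).
  destruct (Rle_dec (r * N h) D); auto. exfalso.
  assert (0 < r) by (destruct Hr; auto; subst; lra).
  assert (0 < N h) by (destruct H0; auto; rewrite <- H0 in n; lra).
  set (a := r * N h) in *.
  (* apply the bidual formula with t = 2a/(a+D) > 1 *)
  destruct (bidual h (2 * a / (a + D))) as [mu [Hmu Hd]]; auto.
  { apply (Rmult_lt_reg_r (a + D)); [lra|]. unfold Rdiv. rewrite Rmult_assoc, Rinv_l by lra. lra. }
  specialize (H (fun k => r * mu k)). rewrite dot_scal_l in H.
  assert (Hscal : dual_norm p N (fun k => r * mu k) <= r).
  { apply dual_norm_le. intros v Hv. rewrite dot_scal_l.
    pose proof (holder mu v). pose proof (dual_norm_nonneg mu). pose proof (N_nonneg p N HN v).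
    apply (Rle_trans _ (r * 1)); [apply Rmult_le_compat_l; nra | lra]. }
  specialize (H Hscal).
  replace (N h / (2 * a / (a + D))) with ((a + D) / (2 * r)) in Hd
    by (unfold a; field; repeat split; nra).
  apply (Rmult_lt_compat_l r) in Hd; auto.
  replace (r * ((a + D) / (2 * r))) with ((a + D) / 2) in Hd by (field; lra). lra.
Qed.

End DualNorm.

(** * Matrices of size e x p as vectors of R^(e p) *)

Definition msq (e p : nat) (a : nat -> nat -> R) : R := fsum e (fun l => sq p (a l)).
Definition mdot (e p : nat) (a b : nat -> nat -> R) : R := fsum e (fun l => dot p (a l) (b l)).

Lemma divmod_lk p l k : (k < p)%nat -> ((l * p + k) / p = l)%nat /\ ((l * p + k) mod p = k)%nat.
Proof.
  intros. split.
  - rewrite Nat.div_add_l, Nat.div_small by lia. lia.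
  - rewrite Nat.add_comm, Nat.Div0.mod_add. apply Nat.mod_small; auto.
Qed.

Lemma divmod_bound m p c : (0 < p)%nat -> (c < m * p)%nat ->
  (c / p < m)%nat /\ (c mod p < p)%nat /\ c = (c / p * p + c mod p)%nat.
Proof.
  intros Hp Hc. pose proof (Nat.div_mod_eq c p). pose proof (Nat.mod_upper_bound c p ltac:(lia)).
  split; [|split; [auto|lia]]. destruct (Nat.lt_ge_cases (c / p) m); auto.
  assert (m * p <= c / p * p)%nat by (apply Nat.mul_le_mono_r; auto). lia.
Qed.

Lemma block_index_bound m p l k : (l < m)%nat -> (k < p)%nat -> (l * p + k < m * p)%nat.
Proof.
  intros Hl Hk. assert (S l * p <= m * p)%nat by (apply Nat.mul_le_mono_r; lia). simpl in H. lia.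
Qed.

Lemma flat_sum m p (f : nat -> nat -> R) : (0 < p)%nat ->
  fsum (m * p) (fun c => f (c / p)%nat (c mod p)%nat) = fsum m (fun l => fsum p (fun k => f l k)).
Proof.
  intros. rewrite fsum_split. apply fsum_ext; intros l _. apply fsum_ext; intros k Hk.
  destruct (divmod_lk p l k Hk) as [-> ->]. auto.
Qed.

Lemma cauchy_schwarz_mat e p a b : (0 < p)%nat -> (mdot e p a b) ^ 2 <= msq e p a * msq e p b.
Proof.
  intros Hp.
  pose proof (cauchy_schwarz (e * p) (fun c => a (c / p)%nat (c mod p)%nat) (fun c => b (c / p)%nat (c mod p)%nat)) as H.
  unfold dot, sq in H.
  rewrite (flat_sum e p (fun l k => a l k * b l k)), (flat_sum e p (fun l k => a l k ^ 2)),
    (flat_sum e p (fun l k => b l k ^ 2)) in H by auto.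
  auto.
Qed.

Lemma msq_nonneg e p a : 0 <= msq e p a.
Proof. apply fsum_nonneg; intros; apply sq_nonneg. Qed.

Lemma msq_zero e p a : msq e p a <= 0 -> forall l k, (l < e)%nat -> (k < p)%nat -> a l k = 0.
Proof.
  intros H l k Hl Hk. apply (sq_zero p); auto.
  rewrite (fsum_nonneg_zero e (fun l => sq p (a l)) (fun l _ => sq_nonneg p (a l)) H l Hl). lra.
Qed.

Lemma msq_coord e p a l k : (l < e)%nat -> (k < p)%nat -> (a l k) ^ 2 <= msq e p a.
Proof.
  intros. eapply Rle_trans.
  - apply (fsum_term_le p (fun k => a l k ^ 2)); auto. intros; apply pow2_ge_0.
  - apply (fsum_term_le e (fun l => sq p (a l))); auto. intros; apply sq_nonneg.
Qed.

Lemma msq_ext e p a b : (forall l k, (l < e)%nat -> (k < p)%nat -> a l k = b l k) ->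
  msq e p a = msq e p b.
Proof. intros. unfold msq, sq. apply fsum_ext; intros. apply fsum_ext; intros. rewrite H; auto. Qed.

Lemma msq_sym e p a b : msq e p (fun l k => a l k - b l k) = msq e p (fun l k => b l k - a l k).
Proof. unfold msq, sq. apply fsum_ext; intros. apply fsum_ext; intros. ring. Qed.

Lemma msq_self_diff e p a : msq e p (fun l k => a l k - a l k) = 0.
Proof.
  unfold msq, sq. rewrite (fsum_ext _ _ (fun _ => 0)); [apply fsum_zero|]. intros.
  rewrite (fsum_ext _ _ (fun _ => 0)); [apply fsum_zero|]. intros; ring.
Qed.

Lemma msq_triangle3 e p a b c :
  msq e p (fun l k => a l k + b l k + c l k) <= 3 * (msq e p a + msq e p b + msq e p c).
Proof.
  unfold msq. rewrite <- !fsum_plus, <- fsum_scal. apply fsum_le; intros l _.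
  unfold sq. rewrite <- !fsum_plus, <- fsum_scal. apply fsum_le; intros k _.
  pose proof (pow2_ge_0 (a l k - b l k)). pose proof (pow2_ge_0 (b l k - c l k)).
  pose proof (pow2_ge_0 (a l k - c l k)). nra.
Qed.

Lemma CV_msq e p (vs : nat -> nat -> nat -> R) v :
  (forall l k, (l < e)%nat -> (k < p)%nat -> Un_cv (fun m => vs m l k) (v l k)) ->
  Un_cv (fun m => msq e p (vs m)) (msq e p v).
Proof. intros. apply (CV_fsum e (fun m l => sq p (vs m l))). intros. apply CV_sq. auto. Qed.

Lemma bolzano_weierstrass_mat e p (u : nat -> nat -> nat -> R) (B : nat -> nat -> R) : (0 < p)%nat ->
  (forall m l k, (l < e)%nat -> (k < p)%nat -> Rabs (u m l k) <= B l k) ->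
  exists phi, strictly_increasing phi /\ exists v : nat -> nat -> R,
    forall l k, (l < e)%nat -> (k < p)%nat -> Un_cv (fun m => u (phi m) l k) (v l k).
Proof.
  intros Hp Hb.
  destruct (bolzano_weierstrass (e * p) (fun m c => u m (c / p)%nat (c mod p)%nat)
              (fun c => B (c / p)%nat (c mod p)%nat)) as [phi [Hphi [v Hv]]].
  { intros m c Hc. destruct (divmod_bound e p c Hp Hc) as [H1 [H2 _]]. apply Hb; auto. }
  exists phi. split; auto. exists (fun l k => v (l * p + k)%nat). intros l k Hl Hk.
  specialize (Hv _ (block_index_bound e p l k Hl Hk)).
  destruct (divmod_lk p l k Hk) as [E1 E2]. rewrite E1, E2 in Hv. auto.
Qed.

(** * The incidence operator of the graph *)

Definition edges_ok (n : nat) (E : list (nat * nat)) : Prop :=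
  forall l, (l < length E)%nat -> (fst (edge E l) < snd (edge E l))%nat /\ (snd (edge E l) < n)%nat.

Lemma edges_ok_of n E : (forall e, In e E -> (fst e < snd e)%nat /\ (snd e < n)%nat) -> edges_ok n E.
Proof. intros H l Hl. apply H. apply nth_In. auto. Qed.

Definition Aop (E : list (nat * nat)) (U : nat -> nat -> R) (l k : nat) : R :=
  U (fst (edge E l)) k - U (snd (edge E l)) k.

(* the AMA vector Delta is the adjoint operator A^t applied to lambda *)
Lemma Delta_eq E lam i k : ama_Delta E lam i k =
  fsum (length E) (fun l => (kdelta i (fst (edge E l)) - kdelta i (snd (edge E l))) * lam l k).
Proof.
  unfold ama_Delta. rewrite <- fsum_minus. apply fsum_ext. intros.
  unfold kdelta. rewrite !(Nat.eqb_sym i). destruct (Nat.eqb _ i), (Nat.eqb _ i); ring.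
Qed.

Lemma Delta_lin E a b i k :
  ama_Delta E a i k - ama_Delta E b i k = ama_Delta E (fun l k => a l k - b l k) i k.
Proof. rewrite !Delta_eq, <- fsum_minus. apply fsum_ext; intros; ring. Qed.

Lemma quad_nonpos_linear_zero a b : (forall t, a * t + b * t ^ 2 <= 0) -> a = 0.
Proof.
  intros H. set (s := / (Rabs b + 1)).
  assert (Hb0 := Rabs_pos b).
  assert (Hs : 0 < s) by (apply Rinv_0_lt_compat; lra).
  assert (Hbs : 0 < 1 + b * s).
  { assert (Rabs b * s < 1).
    { unfold s. apply (Rmult_lt_reg_r (Rabs b + 1)); [lra|].
      rewrite Rmult_assoc, Rinv_l by lra. lra. }
    pose proof (Rle_abs (- b)). rewrite Rabs_Ropp in H1. nra. }
  (* at t = s a the polynomial equals a^2 s (1 + b s) *)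
  specialize (H (s * a)).
  assert (a ^ 2 * (s * (1 + b * s)) <= 0) by (replace (a ^ 2 * (s * (1 + b * s))) with (a * (s * a) + b * (s * a) ^ 2) by ring; auto).
  assert (a ^ 2 <= 0).
  { apply (Rmult_le_reg_r (s * (1 + b * s))); [apply Rmult_lt_0_compat; auto | lra]. }
  nra.
Qed.

Section Incidence.

Variables (n : nat) (E : list (nat * nat)).
Hypothesis HE : edges_ok n E.

Lemma adjoint p lam U : mdot n p (ama_Delta E lam) U = mdot (length E) p lam (Aop E U).
Proof.
  unfold mdot, dot. set (e := length E).
  transitivity (fsum n (fun i => fsum e (fun l => fsum p (fun k =>
      (kdelta i (fst (edge E l)) - kdelta i (snd (edge E l))) * (lam l k * U i k))))).
  { apply fsum_ext; intros i _. rewrite <- fsum_swap. apply fsum_ext; intros k _.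
    rewrite Delta_eq, Rmult_comm, <- fsum_scal. apply fsum_ext; intros; ring. }
  rewrite fsum_swap. apply fsum_ext; intros l Hl. rewrite fsum_swap. apply fsum_ext; intros k _.
  destruct (HE l Hl) as [H1 H2].
  rewrite (fsum_ext _ _ (fun i => kdelta i (fst (edge E l)) * (lam l k * U i k)
                                 - kdelta i (snd (edge E l)) * (lam l k * U i k))) by (intros; ring).
  rewrite fsum_minus, !fsum_delta by lia. unfold Aop. ring.
Qed.

(* the bilinear form of the Laplacian: y^t L z = sum_l (y_l1 - y_l2)(z_l1 - z_l2) *)
Definition edge_form (y z : nat -> R) : R :=
  fsum (length E) (fun l => (y (fst (edge E l)) - y (snd (edge E l))) * (z (fst (edge E l)) - z (snd (edge E l)))).

Lemma Phi_apply l y : (l < length E)%nat ->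
  fsum n (fun j => Phi E l j * y j) = y (fst (edge E l)) - y (snd (edge E l)).
Proof.
  intros Hl. destruct (HE l Hl).
  rewrite (fsum_ext _ _ (fun j => kdelta j (fst (edge E l)) * y j - kdelta j (snd (edge E l)) * y j)).
  - rewrite fsum_minus, !fsum_delta by lia. auto.
  - intros j _. unfold Phi, kdelta.
    destruct (Nat.eqb_spec j (fst (edge E l))), (Nat.eqb_spec j (snd (edge E l))); try lia; ring.
Qed.

Lemma Lap_form y z : fsum n (fun i => z i * fsum n (fun j => Lap E i j * y j)) = edge_form y z.
Proof.
  unfold Lap. unfold edge_form.
  transitivity (fsum n (fun i => fsum (length E) (fun l => (Phi E l i * z i) *
                                   fsum n (fun j => Phi E l j * y j)))).
  { apply fsum_ext; intros i _.
    rewrite (fsum_ext n _ (fun j => fsum (length E) (fun l => Phi E l i * (Phi E l j * y j))))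
      by (intros; rewrite Rmult_comm, <- fsum_scal; apply fsum_ext; intros; ring).
    rewrite fsum_swap, <- fsum_scal. apply fsum_ext; intros. rewrite <- fsum_scal, <- fsum_scal.
    apply fsum_ext; intros; ring. }
  rewrite fsum_swap. apply fsum_ext. intros l Hl.
  rewrite Phi_apply by auto. rewrite (fsum_ext n _ (fun i => (y (fst (edge E l)) - y (snd (edge E l))) * (Phi E l i * z i)))
    by (intros; ring).
  rewrite fsum_scal, Phi_apply by auto. auto.
Qed.

Lemma edge_form_nonneg y : 0 <= edge_form y y.
Proof. apply fsum_nonneg. intros. apply Rle_0_sqr. Qed.

Lemma edge_form_ext y y' z z' : (forall i, (i < n)%nat -> y i = y' i) ->
  (forall i, (i < n)%nat -> z i = z' i) -> edge_form y z = edge_form y' z'.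
Proof. intros. unfold edge_form. apply fsum_ext. intros l Hl. destruct (HE l Hl). rewrite !H, !H0 by lia. auto. Qed.

Lemma Lap_eigenvalue_nonneg mu : is_eigenvalue n (Lap E) mu -> 0 <= mu.
Proof.
  intros [v [[k [Hk Hv]] Hev]].
  pose proof (Lap_form v v) as Hform.
  rewrite (fsum_ext n _ (fun i => mu * v i ^ 2)), fsum_scal in Hform by (intros; rewrite Hev by auto; ring).
  fold (sq n v) in Hform. pose proof (edge_form_nonneg v).
  assert (0 < sq n v); [|nra].
  assert (Hvk : 0 < v k ^ 2) by (pose proof (Rsqr_pos_lt _ Hv) as Hs; unfold Rsqr in Hs; nra).
  apply (Rlt_le_trans _ _ _ Hvk).
  apply (fsum_term_le n (fun k => v k ^ 2)); auto. intros; apply pow2_ge_0.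
Qed.

(* If ys is a unit vector maximizing the Rayleigh quotient of L, then its value
   mu is an eigenvalue (first-order condition in every coordinate direction). *)
Lemma rayleigh_max_eigenvalue ys mu : sq n ys = 1 -> edge_form ys ys = mu ->
  (forall w, edge_form w w <= mu * sq n w) -> is_eigenvalue n (Lap E) mu.
Proof.
  intros Hys Hmu Hall. exists ys. split.
  - apply NNPP. intros Hc. assert (sq n ys <= 0); [|lra].
    unfold sq. rewrite (fsum_ext _ _ (fun _ => 0)); [rewrite fsum_zero; lra|].
    intros k Hk. destruct (Req_dec (ys k) 0) as [H|H]; [rewrite H; ring | exfalso; eauto].
  - intros i Hi. set (ei := fun k => kdelta k i).
    (* t |-> mu |ys + t e_i|^2 - <ys + t e_i, L (ys + t e_i)> is >= 0 and vanishes at 0 *)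
    assert (Hq : forall t, 2 * (edge_form ys ei - mu * ys i) * t
                           + (edge_form ei ei - mu * sq n ei) * t ^ 2 <= 0).
    { intros t. specialize (Hall (fun k => ys k + t * ei k)).
      replace (edge_form (fun k => ys k + t * ei k) (fun k => ys k + t * ei k))
        with (edge_form ys ys + 2 * t * edge_form ys ei + t ^ 2 * edge_form ei ei) in Hall
        by (unfold edge_form; rewrite <- !fsum_scal, <- !fsum_plus; apply fsum_ext; intros; ring).
      replace (sq n (fun k => ys k + t * ei k)) with (sq n ys + 2 * t * ys i + t ^ 2 * sq n ei) in Hall.
      + rewrite Hys, Hmu in *. nra.
      + unfold sq. rewrite <- (fsum_delta n i ys) by auto. rewrite <- !fsum_scal, <- !fsum_plus.
        apply fsum_ext; intros; unfold ei; ring. }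
    assert (Hlin : 2 * (edge_form ys ei - mu * ys i) = 0)
      by (apply (quad_nonpos_linear_zero _ (edge_form ei ei - mu * sq n ei)); auto).
    assert (Hrow : fsum n (fun k => ei k * fsum n (fun j => Lap E k j * ys j))
                   = fsum n (fun j => Lap E i j * ys j)) by (apply fsum_delta; auto).
    rewrite <- (Lap_form ys ei), Hrow in Hlin. lra.
Qed.

Lemma rayleigh rho : is_largest_eigenvalue n (Lap E) rho -> forall y, edge_form y y <= rho * sq n y.
Proof.
  intros [Hev Hmax].
  assert (Hn : (0 < n)%nat) by (destruct Hev as [v [[k [Hk _]] _]]; lia).
  destruct (max_attained n (fun y => sq n y = 1) (fun y => edge_form y y) (fun _ => 1)
             (fsum (length E) (fun _ => 4))) as [ys [Hys Hymax]].
  - exists (fun j => kdelta j 0). unfold sq.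
    rewrite (fsum_ext _ _ (fun k => kdelta k 0 * 1)); [apply fsum_delta; auto|].
    intros. unfold kdelta. destruct (Nat.eqb k 0); lra.
  - intros v Hv k Hk. pose proof (coord_le_sqrt n v k Hk). rewrite Hv, sqrt_1 in H. auto.
  - intros vs v Hvs Hc. split.
    + apply (UL_sequence (fun m => sq n (vs m))); [apply CV_sq; auto|].
      apply (CV_ext (fun _ => 1)); [intros; rewrite Hvs; auto | apply CV_const].
    + apply (CV_fsum _ (fun m l => (vs m (fst (edge E l)) - vs m (snd (edge E l))) *
                                   (vs m (fst (edge E l)) - vs m (snd (edge E l))))).
      intros l Hl. destruct (HE l Hl). apply CV_mult; apply CV_minus; apply Hc; lia.
  - intros v Hv. apply fsum_le. intros l Hl. destruct (HE l Hl).
    pose proof (fsum_term_le n (fun k => v k ^ 2) (fst (edge E l)) (fun k _ => pow2_ge_0 (v k)) ltac:(lia)).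
    pose proof (fsum_term_le n (fun k => v k ^ 2) (snd (edge E l)) (fun k _ => pow2_ge_0 (v k)) ltac:(lia)).
    fold (sq n v) in *. rewrite Hv in *. simpl in *. nra.
  - (* by homogeneity the spherical maximum bounds the quotient everywhere *)
    assert (Hall : forall w, edge_form w w <= edge_form ys ys * sq n w).
    { intros w. destruct (sq_nonneg n w) as [H|H].
      - specialize (Hymax _ (sq_normalize n w H)).
        set (s := sqrt (sq n w)) in *. assert (Hs : 0 < s) by (apply sqrt_lt_R0; lra).
        assert (Hss : s * s = sq n w) by (apply sqrt_sqrt; lra).
        replace (edge_form (fun k => / s * w k) (fun k => / s * w k)) with ((/ s) ^ 2 * edge_form w w) in Hymax
          by (unfold edge_form; rewrite <- fsum_scal; apply fsum_ext; intros; ring).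
        rewrite <- Hss. apply (Rmult_le_reg_l ((/ s) ^ 2)); [apply pow_lt, Rinv_0_lt_compat; auto|].
        replace ((/ s) ^ 2 * (edge_form ys ys * (s * s))) with (edge_form ys ys) by (field; lra). auto.
      - rewrite (edge_form_ext w (fun _ => 0) w (fun _ => 0)) by (apply sq_zero; lra).
        unfold edge_form. rewrite (fsum_ext _ _ (fun _ => 0)), fsum_zero, <- H by (intros; ring). lra. }
    intros y. eapply Rle_trans; [apply Hall|]. apply Rmult_le_compat_r; [apply sq_nonneg|].
    apply Hmax, (rayleigh_max_eigenvalue ys); auto.
Qed.

Section Bounds.

Variables (p : nat) (rho : R).
Hypotheses (Hp : (0 < p)%nat) (Hray : forall y, edge_form y y <= rho * sq n y).

(* |A U|^2 <= rho |U|^2, applying the Rayleigh bound column by column *)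
Lemma incidence_bound U : msq (length E) p (Aop E U) <= rho * msq n p U.
Proof.
  unfold msq, sq, Aop. rewrite fsum_swap, (fsum_swap n p), <- fsum_scal.
  apply fsum_le. intros k Hk. eapply Rle_trans; [|apply (Hray (fun i => U i k))].
  unfold edge_form. apply Req_le. apply fsum_ext; intros; ring.
Qed.

(* |A^t lam|^2 <= rho |lam|^2, by duality and Cauchy-Schwarz *)
Lemma adjoint_bound lam : 0 <= rho -> msq n p (ama_Delta E lam) <= rho * msq (length E) p lam.
Proof.
  intros Hrho0. set (V := msq n p (ama_Delta E lam)).
  assert (HV : V = mdot (length E) p lam (Aop E (ama_Delta E lam))).
  { rewrite <- adjoint. unfold V, msq, mdot. apply fsum_ext; intros. rewrite dot_self. auto. }
  pose proof (cauchy_schwarz_mat (length E) p lam (Aop E (ama_Delta E lam)) Hp) as Hcs.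
  rewrite <- HV in Hcs. pose proof (incidence_bound (ama_Delta E lam)) as Hinc. fold V in Hinc.
  pose proof (msq_nonneg (length E) p lam). assert (HV0 : 0 <= V) by apply msq_nonneg.
  destruct HV0 as [HV0|HV0]; [|rewrite <- HV0; nra].
  assert (V ^ 2 <= msq (length E) p lam * (rho * V)); [|nra].
  eapply Rle_trans; [apply Hcs | apply Rmult_le_compat_l; auto].
Qed.

End Bounds.

End Incidence.

(** * A^t A = L (x) I_p and its spectrum *)

Lemma AtA_eq p E (Hp : (0 < p)%nat) a b : AtA p E a b = LkronI p E a b.
Proof.
  unfold AtA, Amat, LkronI, Lap.
  rewrite (flat_sum (length E) p (fun l k => Phi E l (a / p) * kdelta k (a mod p) * (Phi E l (b / p) * kdelta k (b mod p))) Hp).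
  rewrite Rmult_comm, <- fsum_scal. apply fsum_ext. intros l _.
  rewrite (fsum_ext p _ (fun k => kdelta k (a mod p) * (Phi E l (a / p) * (Phi E l (b / p) * kdelta k (b mod p)))))
    by (intros; ring).
  rewrite fsum_delta by (apply Nat.mod_upper_bound; lia). rewrite kdelta_sym. ring.
Qed.

Lemma AtA_apply p n E (Hp : (0 < p)%nat) a (V : nat -> R) :
  fsum (n * p) (fun b => AtA p E a b * V b) =
  fsum n (fun j => fsum p (fun k => Lap E (a / p) j * kdelta (a mod p) k * V (j * p + k)%nat)).
Proof.
  rewrite (fsum_ext _ _ (fun b => LkronI p E a b * V b)) by (intros; rewrite AtA_eq; auto).
  rewrite fsum_split. apply fsum_ext; intros j _. apply fsum_ext; intros k Hk.
  unfold LkronI. destruct (divmod_lk p j k Hk) as [-> ->]. auto.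
Qed.

(* an eigenvector v of L gives the eigenvector v (x) e_0 of L (x) I_p *)
Lemma eigenvalue_kron_up p n E (Hp : (0 < p)%nat) mu :
  is_eigenvalue n (Lap E) mu -> is_eigenvalue (n * p) (AtA p E) mu.
Proof.
  intros [v [[k [Hk Hv]] Hev]].
  exists (fun a => v (a / p)%nat * kdelta (a mod p) 0). split.
  - exists (k * p + 0)%nat. split; [apply block_index_bound; auto|].
    destruct (divmod_lk p k 0 Hp) as [-> ->]. rewrite kdelta_same, Rmult_1_r. auto.
  - intros a Ha. rewrite AtA_apply by auto.
    rewrite (fsum_ext n _ (fun j => kdelta (a mod p) 0 * (Lap E (a / p) j * v j))).
    + rewrite fsum_scal, Hev; [ring|]. destruct (divmod_bound n p a Hp Ha); auto.
    + intros j _. rewrite (fsum_ext p _ (fun k => kdelta k 0 * (Lap E (a / p) j * v j * kdelta (a mod p) k))).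
      * rewrite fsum_delta by auto. ring.
      * intros k0 Hk0. destruct (divmod_lk p j k0 Hk0) as [-> ->]. ring.
Qed.

(* a nonzero column slice of an eigenvector of L (x) I_p is an eigenvector of L *)
Lemma eigenvalue_kron_down p n E (Hp : (0 < p)%nat) mu :
  is_eigenvalue (n * p) (AtA p E) mu -> is_eigenvalue n (Lap E) mu.
Proof.
  intros [V [[a0 [Ha0 HV]] Hev]].
  set (k0 := (a0 mod p)%nat).
  destruct (divmod_bound n p a0 Hp Ha0) as [H1 [H2 H3]].
  exists (fun i => V (i * p + k0)%nat). split.
  - exists (a0 / p)%nat. split; auto. unfold k0. rewrite <- H3. auto.
  - intros i Hi. specialize (Hev _ (block_index_bound n p i k0 Hi H2)). rewrite AtA_apply in Hev by auto.
    destruct (divmod_lk p i k0 H2) as [E1 E2]. rewrite E1, E2 in Hev. rewrite <- Hev.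
    apply fsum_ext. intros j _.
    rewrite (fsum_ext p _ (fun k => kdelta k k0 * (Lap E i j * V (j * p + k)%nat))).
    + rewrite fsum_delta by auto. auto.
    + intros; rewrite kdelta_sym; ring.
Qed.

Lemma AtA_largest_eigenvalue p n E rho : (0 < p)%nat ->
  is_largest_eigenvalue n (Lap E) rho -> is_largest_eigenvalue (n * p) (AtA p E) rho.
Proof.
  intros Hp [Hr1 Hr2]. split; [apply eigenvalue_kron_up; auto|].
  intros mu Hmu. apply Hr2. apply (eigenvalue_kron_down p); auto.
Qed.

(** * Convergence of iterates of a nonexpansive map *)

Lemma sufficient_decrease_cv0 (f r : nat -> R) (c : R) : 0 < c ->
  (forall m, 0 <= f m) -> (forall m, 0 <= r m) -> (forall m, f (S m) <= f m - c * r m) ->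
  Un_cv r 0.
Proof.
  intros Hc Hf Hr Hdec.
  destruct (decreasing_cv f) as [L HL].
  { intros m. specialize (Hdec m). specialize (Hr m). unfold Rge. nra. }
  { exists 0. intros t [i ->]. unfold opp_seq. specialize (Hf i). lra. }
  apply (Rabs_squeeze _ (fun m => / c * (f m - f (S m)))).
  - intros m. rewrite Rminus_0_r, Rabs_pos_eq by auto. specialize (Hdec m).
    apply (Rmult_le_reg_l c); auto. rewrite <- Rmult_assoc, Rinv_r by lra. lra.
  - replace 0 with (/ c * (L - L)) by ring. apply CV_scal, CV_minus; auto.
    intros eps Heps. destruct (HL eps Heps) as [K HK]. exists K. intros. apply HK. lia.
Qed.

Section NonexpansiveIteration.

Variables (e p : nat) (T : (nat -> nat -> R) -> nat -> nat -> R).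
Hypothesis T_nonexp : forall a b,
  msq e p (fun l k => T a l k - T b l k) <= msq e p (fun l k => a l k - b l k).

Definition is_fixed (lb : nat -> nat -> R) : Prop :=
  forall l k, (l < e)%nat -> (k < p)%nat -> T lb l k = lb l k.

Variable mu : nat -> nat -> nat -> R.
Hypothesis mu_iter : forall m, mu (S m) = T (mu m).

Definition step_sq (m : nat) : R := msq e p (fun l k => mu (S m) l k - mu m l k).

Lemma msq_to_limit_cv0 (phi : nat -> nat) lb :
  (forall l k, (l < e)%nat -> (k < p)%nat -> Un_cv (fun m => mu (phi m) l k) (lb l k)) ->
  Un_cv (fun m => msq e p (fun l k => mu (phi m) l k - lb l k)) 0.
Proof.
  intros Hcv. rewrite <- (msq_self_diff e p lb).
  apply (CV_msq e p (fun m l k => mu (phi m) l k - lb l k)). intros.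
  apply CV_minus; [auto | apply CV_const].
Qed.

(* A cluster point of an asymptotically regular sequence is a fixed point:
   |T lb - lb|^2 <= 3 (|T lb - T mu_j|^2 + |mu_{j+1} - mu_j|^2 + |mu_j - lb|^2). *)
Lemma cluster_point_fixed phi lb : strictly_increasing phi -> Un_cv step_sq 0 ->
  (forall l k, (l < e)%nat -> (k < p)%nat -> Un_cv (fun m => mu (phi m) l k) (lb l k)) ->
  is_fixed lb.
Proof.
  intros Hphi Hstep Hcv.
  set (Z := msq e p (fun l k => T lb l k - lb l k)).
  assert (HZ : Z <= 0).
  { apply (CV_ge_const (fun m => 3 * (2 * msq e p (fun l k => mu (phi m) l k - lb l k) + step_sq (phi m))) 0 Z).
    - replace 0 with (3 * (2 * 0 + 0)) by ring.
      apply CV_scal, CV_plus; [apply CV_scal, msq_to_limit_cv0; auto | apply CV_subseq; auto].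
    - intros m. set (j := phi m).
      pose proof (msq_triangle3 e p (fun l k => T lb l k - T (mu j) l k)
                    (fun l k => mu (S j) l k - mu j l k) (fun l k => mu j l k - lb l k)) as H3.
      rewrite (msq_ext e p _ (fun l k => T lb l k - lb l k)) in H3 by (intros; rewrite mu_iter; ring).
      pose proof (T_nonexp lb (mu j)) as Hne. rewrite (msq_sym e p lb (mu j)) in Hne.
      unfold step_sq. fold Z in H3. lra. }
  intros l k Hl Hk. pose proof (msq_zero e p _ HZ l k Hl Hk) as Hz. simpl in Hz. lra.
Qed.

(* Fejer monotonicity: the distance to a fixed point never increases, so a
   subsequence converging to it forces convergence of the whole sequence. *)
Lemma fejer_convergence phi lb : strictly_increasing phi -> is_fixed lb ->
  (forall l k, (l < e)%nat -> (k < p)%nat -> Un_cv (fun m => mu (phi m) l k) (lb l k)) ->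
  forall l k, (l < e)%nat -> (k < p)%nat -> Un_cv (fun m => mu m l k) (lb l k).
Proof.
  intros Hphi Hfix Hcv.
  set (ds m := msq e p (fun l k => mu m l k - lb l k)).
  assert (Hmono : forall a b, (a <= b)%nat -> ds b <= ds a).
  { intros a b Hab. induction Hab; [lra|]. eapply Rle_trans; [|apply IHHab].
    unfold ds. rewrite mu_iter.
    rewrite (msq_ext e p (fun l k => T (mu m) l k - lb l k) (fun l k => T (mu m) l k - T lb l k))
      by (intros; rewrite Hfix; auto).
    apply T_nonexp. }
  assert (Hds : Un_cv ds 0).
  { intros eps Heps. destruct (msq_to_limit_cv0 phi lb Hcv eps Heps) as [M HM].
    specialize (HM M (le_n _)).
    exists (phi M). intros m Hm. unfold Rdist in *. rewrite Rminus_0_r in *.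
    assert (0 <= ds m) by apply msq_nonneg.
    rewrite Rabs_pos_eq in * by (auto; apply msq_nonneg). specialize (Hmono _ _ Hm). fold (ds (phi M)) in HM. lra. }
  (* each coordinate is controlled by the Frobenius distance *)
  intros l k Hl Hk.
  apply (Rabs_squeeze _ (fun m => sqrt (ds m))).
  - intros m. rewrite <- sqrt_Rsqr_abs. apply sqrt_le_1_alt. rewrite Rsqr_pow2.
    apply (msq_coord e p (fun l k => mu m l k - lb l k)); auto.
  - rewrite <- sqrt_0. apply continuity_seq; [apply continuity_pt_sqrt; lra | auto].
Qed.

Lemma nonexpansive_iterates_converge (B : nat -> nat -> R) : (0 < p)%nat ->
  (forall m l k, (l < e)%nat -> (k < p)%nat -> Rabs (mu m l k) <= B l k) ->
  Un_cv step_sq 0 ->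
  exists lb, is_fixed lb /\
    forall l k, (l < e)%nat -> (k < p)%nat -> Un_cv (fun m => mu m l k) (lb l k).
Proof.
  intros Hp Hb Hstep.
  destruct (bolzano_weierstrass_mat e p mu B Hp Hb) as [phi [Hphi [lb Hcv]]].
  assert (Hfix : is_fixed lb) by (apply (cluster_point_fixed phi); auto).
  exists lb. split; auto. apply (fejer_convergence phi); auto.
Qed.

End NonexpansiveIteration.

(** * The AMA iteration *)

Section AMA.

Variables (p n : nat) (x : nat -> nat -> R) (N : (nat -> R) -> R) (gamma : R)
  (E : list (nat * nat)) (w : nat -> R) (nu : R).
Hypotheses (Hp : (0 < p)%nat) (HN : is_norm p N) (Hgamma : 0 <= gamma)
  (HE : edges_ok n E) (Hw : forall l, (l < length E)%nat -> 0 < w l) (Hnu : 0 < nu).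

Definition dual_ball (l : nat) : (nat -> R) -> Prop := C_set p N gamma (w l).

Definition ama_map (lam : nat -> nat -> R) : nat -> nat -> R := ama_step p N gamma w x E nu lam.
Definition ama_pre (lam : nat -> nat -> R) (l : nat) : nat -> R :=
  fun k => lam l k - nu * ama_g x E lam l k.

Definition dual_feasible (lam : nat -> nat -> R) : Prop := forall l, (l < length E)%nat -> dual_ball l (lam l).

Lemma dual_ball_convex l : convex_set (dual_ball l).
Proof.
  intros a b s Ha Hb Hs. unfold dual_ball, C_set in *.
  eapply Rle_trans; [apply dual_norm_convex; auto | nra].
Qed.

(* dual balls are nonempty, bounded and closed, so the projection is attained *)
Lemma ama_map_proj lam l : (l < length E)%nat -> is_proj p (dual_ball l) (ama_pre lam l) (ama_map lam l).
Proof.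
  intros Hl. apply proj_spec, (proj_exists p _ (fun _ => gamma * w l * basis_norm_sum p N)).
  - exists (fun _ => 0). apply dual_norm_le; auto. intros. rewrite dot_zero_l.
    specialize (Hw l Hl). nra.
  - intros v Hv k Hk. apply (dual_norm_coord p N HN Hp v); auto.
  - intros vs v Hvs Hc. apply (dual_norm_closed p N HN Hp vs); auto.
Qed.

Lemma ama_map_feasible lam : dual_feasible (ama_map lam).
Proof. intros l Hl. apply (ama_map_proj lam l Hl). Qed.

(* the iterates from m = 1 on are feasible, hence uniformly bounded *)
Lemma ama_lam_bounded lam0 m l k : (l < length E)%nat -> (k < p)%nat ->
  Rabs (ama_lam p N gamma w x E nu lam0 (S m) l k) <= gamma * w l * basis_norm_sum p N.
Proof. intros Hl Hk. apply (dual_norm_coord p N HN Hp); auto. apply (ama_map_feasible _ l Hl). Qed.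

Section Convergence.

Variable rho : R.
Hypotheses (Hray : forall y, edge_form E y y <= rho * sq n y) (Hrho0 : 0 <= rho)
  (Hnurho : nu * rho < 2).

(* the dual objective, up to constants: 1/2 |x + Delta lambda|^2 *)
Definition dual_obj (lam : nat -> nat -> R) : R := / 2 * msq n p (ama_u x E lam).

(* Sufficient decrease of the projected gradient step with step size nu < 2/rho:
   the gradient A(x + Delta lambda) is rho-Lipschitz. *)
Lemma ama_descent lam : dual_feasible lam ->
  dual_obj (ama_map lam) <= dual_obj lam - (/ nu - rho / 2) * msq (length E) p (fun l k => ama_map lam l k - lam l k).
Proof.
  intros Hin. set (lp := ama_map lam). set (d := fun l k => lp l k - lam l k).
  set (G := mdot (length E) p (ama_g x E lam) d).
  (* variational inequality of the projection at the old (feasible) point *)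
  assert (HVI : msq (length E) p d + nu * G <= 0).
  { unfold G, msq, mdot. rewrite <- fsum_scal, <- fsum_plus, <- (fsum_zero (length E)). apply fsum_le.
    intros l Hl.
    pose proof (proj_VI p _ _ _ (dual_ball_convex l) (ama_map_proj lam l Hl) (lam l) (Hin l Hl)) as VI.
    replace (dot p (fun k => ama_pre lam l k - ama_map lam l k) (fun k => lam l k - ama_map lam l k))
      with (sq p (d l) + nu * dot p (ama_g x E lam l) (d l)) in VI; [auto|].
    unfold dot, sq. rewrite <- fsum_scal, <- fsum_plus. apply fsum_ext; intros; unfold ama_pre, d, lp; ring. }
  assert (Hu : msq n p (ama_u x E lp) =
               msq n p (ama_u x E lam) + 2 * G + msq n p (ama_Delta E d)).
  { assert (HG : mdot n p (ama_Delta E d) (ama_u x E lam) = G).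
    { rewrite (adjoint n E HE). unfold G, mdot. apply fsum_ext; intros. apply dot_sym. }
    rewrite <- HG. unfold msq, mdot, sq, dot. rewrite <- fsum_scal, <- !fsum_plus. apply fsum_ext; intros i _.
    rewrite <- fsum_scal, <- !fsum_plus. apply fsum_ext; intros k _. unfold ama_u.
    rewrite <- (Delta_lin E lp lam). ring. }
  pose proof (adjoint_bound n E HE p rho Hp Hray d Hrho0).
  assert (G <= - msq (length E) p d / nu).
  { apply (Rmult_le_reg_l nu); auto. replace (nu * (- msq (length E) p d / nu)) with (- msq (length E) p d) by (field; lra). lra. }
  unfold dual_obj. rewrite Hu. fold d. unfold Rdiv in *. nra.
Qed.

(* The AMA map is nonexpansive: P_C is nonexpansive and the gradient step
   lambda - nu A (x + Delta lambda) is, because nu rho <= 2. *)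
Lemma ama_nonexp a b :
  msq (length E) p (fun l k => ama_map a l k - ama_map b l k) <= msq (length E) p (fun l k => a l k - b l k).
Proof.
  set (dl := fun l k => a l k - b l k).
  apply (Rle_trans _ (msq (length E) p (fun l k => ama_pre a l k - ama_pre b l k))).
  { apply fsum_le. intros l Hl.
    apply (proj_nonexp p (dual_ball l)); [apply dual_ball_convex | apply ama_map_proj; auto ..]. }
  set (V := msq n p (ama_Delta E dl)).
  assert (Hy : msq (length E) p (fun l k => ama_pre a l k - ama_pre b l k) =
     msq (length E) p dl - 2 * nu * V + nu ^ 2 * msq (length E) p (Aop E (ama_Delta E dl))).
  { assert (HV : mdot (length E) p dl (Aop E (ama_Delta E dl)) = V).
    { rewrite <- (adjoint n E HE). unfold V, mdot, msq. apply fsum_ext; intros. apply dot_self. }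
    rewrite <- HV. unfold msq, mdot, sq, dot.
    rewrite <- !fsum_scal, <- fsum_minus, <- fsum_plus. apply fsum_ext; intros l _.
    rewrite <- !fsum_scal, <- fsum_minus, <- fsum_plus. apply fsum_ext; intros k _.
    unfold ama_pre, ama_g, Aop, ama_u, dl. rewrite <- !(Delta_lin E a b). ring. }
  rewrite Hy.
  pose proof (incidence_bound n E p rho Hray (ama_Delta E dl)) as Hinc. fold V in Hinc.
  assert (0 <= V) by apply msq_nonneg.
  assert (nu ^ 2 * msq (length E) p (Aop E (ama_Delta E dl)) <= nu ^ 2 * (rho * V))
    by (apply Rmult_le_compat_l; auto; apply pow2_ge_0).
  assert (nu ^ 2 * (rho * V) <= 2 * nu * V).
  { replace (nu ^ 2 * (rho * V)) with ((nu * rho) * (nu * V)) by ring.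
    replace (2 * nu * V) with (2 * (nu * V)) by ring.
    apply Rmult_le_compat_r; [apply Rmult_le_pos|]; lra. }
  lra.
Qed.

Lemma ama_converges lam0 : exists lb, dual_feasible lb /\ is_fixed (length E) p ama_map lb /\
  forall l k, (l < length E)%nat -> (k < p)%nat ->
    Un_cv (fun m => ama_lam p N gamma w x E nu lam0 m l k) (lb l k).
Proof.
  (* drop lam0, which need not be feasible *)
  set (mu m := ama_lam p N gamma w x E nu lam0 (S m)).
  assert (Hmu : forall m, mu (S m) = ama_map (mu m)) by reflexivity.
  assert (Hfeas : forall m, dual_feasible (mu m)) by (intros; apply ama_map_feasible).
  assert (Hc0 : 0 < / nu - rho / 2).
  { apply (Rmult_lt_reg_r nu); auto. rewrite Rmult_minus_distr_r, Rinv_l by lra. lra. }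
  assert (Hstep : Un_cv (step_sq (length E) p mu) 0).
  { apply (sufficient_decrease_cv0 (fun m => dual_obj (mu m)) _ (/ nu - rho / 2)); auto.
    - intros. unfold dual_obj. pose proof (msq_nonneg n p (ama_u x E (mu m))). lra.
    - intros. apply msq_nonneg.
    - intros m. unfold step_sq. rewrite Hmu. apply ama_descent, Hfeas. }
  destruct (nonexpansive_iterates_converge (length E) p ama_map ama_nonexp mu Hmu
              (fun l _ => gamma * w l * basis_norm_sum p N) Hp) as [lb [Hfix Hcv]]; auto.
  { intros m l k Hl Hk. apply ama_lam_bounded; auto. }
  exists lb. split; [|split; auto].
  - intros l Hl. pose proof (ama_map_feasible lb l Hl). unfold dual_ball, C_set in *.
    rewrite (dual_norm_ext p N HN Hp (lb l) (ama_map lb l)); auto. intros; symmetry; auto.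
  - intros l k Hl Hk. apply CV_shift. apply Hcv; auto.
Qed.

End Convergence.

(** * Optimality of the limit *)

Lemma complementary_slackness lb : dual_feasible lb -> is_fixed (length E) p ama_map lb ->
  forall l, (l < length E)%nat ->
    dot p (lb l) (fun k => - ama_g x E lb l k) = gamma * w l * N (ama_g x E lb l).
Proof.
  intros HC Hfix l Hl. set (h := fun k => - ama_g x E lb l k).
  assert (HNh : N h = N (ama_g x E lb l)) by apply (N_opp p N HN).
  assert (Hr : 0 <= gamma * w l) by (specialize (Hw l Hl); nra).
  apply Rle_antisym.
  - eapply Rle_trans; [apply (holder p N HN Hp)|]. rewrite HNh.
    apply Rmult_le_compat_r; [apply (N_nonneg p N HN) | apply HC; auto].
  - (* lb l = P_C(lb l + nu h), so <m - lb l, h> <= 0 for every m in the ball *)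
    rewrite <- HNh. apply (dual_sup p N HN Hp h); auto. intros m Hm.
    pose proof (proj_VI p _ _ _ (dual_ball_convex l) (ama_map_proj lb l Hl) m Hm) as VI.
    rewrite (dot_ext p _ _ (fun k => nu * h k) (fun k => m k - lb l k)) in VI
      by (intros; unfold ama_pre, h; rewrite Hfix; auto; ring).
    rewrite dot_scal_l, dot_minus_r, (dot_sym p h m), (dot_sym p h (lb l)) in VI.
    assert (dot p m h - dot p (lb l) h <= 0); [|lra].
    apply (Rmult_le_reg_l nu); auto. lra.
Qed.

(* the Lagrangian after minimization over V:  1/2 |X - U|^2 - <Delta lambda, U> *)
Definition lagrangian_U (lb U : nat -> nat -> R) : R :=
  / 2 * fsum n (fun i => sqdist p (x i) (U i)) - mdot n p (ama_Delta E lb) U.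

Lemma lagrangian_U_shift lb U :
  lagrangian_U lb U = lagrangian_U lb (ama_u x E lb) + / 2 * msq n p (fun i k => U i k - ama_u x E lb i k).
Proof.
  assert (H : forall V, lagrangian_U lb V - / 2 * msq n p (fun i k => V i k - ama_u x E lb i k) =
     fsum n (fun i => fsum p (fun k => / 2 * x i k ^ 2 - / 2 * ama_u x E lb i k ^ 2))).
  { intros V. unfold lagrangian_U, mdot, msq, sqdist, sq, dot. rewrite <- !fsum_scal, <- !fsum_minus.
    apply fsum_ext; intros i _. rewrite <- !fsum_scal, <- !fsum_minus.
    apply fsum_ext; intros k _. unfold ama_u. field. }
  pose proof (H U). pose proof (H (ama_u x E lb)). pose proof (msq_self_diff n p (ama_u x E lb)). lra.
Qed.

(* for dual-feasible lambda, the minimization over V only removes a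
   nonnegative term: gamma w_l ||v_l|| + <lambda_l, v_l> >= 0 *)
Lemma lagrangian_U_le lb : dual_feasible lb ->
  forall U V, lagrangian_U lb U <= Lagrangian p n N gamma w x E U V lb.
Proof.
  intros HC U V. unfold Lagrangian, lagrangian_U. rewrite (adjoint n E HE). unfold mdot.
  rewrite (fsum_ext (length E)
    (fun l => dot p (lb l) (fun k => V l k - (U (fst (edge E l)) k - U (snd (edge E l)) k)))
    (fun l => dot p (lb l) (V l) - dot p (lb l) (Aop E U l)))
    by (intros; unfold dot, Aop; rewrite <- fsum_minus; apply fsum_ext; intros; ring).
  rewrite fsum_minus.
  assert (0 <= gamma * fsum (length E) (fun l => w l * N (V l)) + fsum (length E) (fun l => dot p (lb l) (V l)));
    [|lra].
  rewrite <- fsum_scal, <- fsum_plus. apply fsum_nonneg. intros l Hl.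
  pose proof (holder p N HN Hp (lb l) (fun k => - V l k)) as Hh.
  rewrite dot_opp_r, (N_opp p N HN) in Hh.
  pose proof (HC l Hl). unfold dual_ball, C_set in *. pose proof (N_nonneg p N HN (V l)).
  assert (dual_norm p N (lb l) * N (V l) <= gamma * w l * N (V l)) by (apply Rmult_le_compat_r; auto).
  nra.
Qed.

(* no duality gap at a fixed point: F(x + Delta lambda) = lagrangian_U lambda (x + Delta lambda) *)
Lemma F_at_fixed_point lb : dual_feasible lb -> is_fixed (length E) p ama_map lb ->
  Fgamma p n N gamma w x E (ama_u x E lb) = lagrangian_U lb (ama_u x E lb).
Proof.
  intros HC Hfix. unfold Fgamma, lagrangian_U. rewrite (adjoint n E HE). unfold mdot.
  assert (Hpen : gamma * fsum (length E) (fun l => w l * N (fun k =>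
                   ama_u x E lb (fst (edge E l)) k - ama_u x E lb (snd (edge E l)) k))
               = -1 * fsum (length E) (fun l => dot p (lb l) (Aop E (ama_u x E lb) l))).
  { rewrite <- !fsum_scal. apply fsum_ext. intros l Hl.
    pose proof (complementary_slackness lb HC Hfix l Hl) as Hcs.
    rewrite dot_opp_r in Hcs. unfold ama_g in Hcs. unfold Aop. lra. }
  rewrite Hpen. ring.
Qed.

Lemma F_as_lagrangian lb U : Fgamma p n N gamma w x E U = Lagrangian p n N gamma w x E U (Aop E U) lb.
Proof.
  unfold Fgamma, Lagrangian.
  rewrite (fsum_ext (length E) (fun l => dot p (lb l)
             (fun k => Aop E U l k - (U (fst (edge E l)) k - U (snd (edge E l)) k))) (fun _ => 0));
    [rewrite fsum_zero; unfold Aop; ring|].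
  intros l _. rewrite (dot_ext p _ _ (lb l) (fun _ => 0)) by (auto; intros; unfold Aop; ring).
  rewrite dot_sym, dot_zero_l. auto.
Qed.

Lemma lagrangian_growth lb : dual_feasible lb -> is_fixed (length E) p ama_map lb ->
  forall U V, Fgamma p n N gamma w x E (ama_u x E lb) + / 2 * msq n p (fun i k => U i k - ama_u x E lb i k)
      <= Lagrangian p n N gamma w x E U V lb.
Proof.
  intros HC Hfix U V. rewrite F_at_fixed_point, <- lagrangian_U_shift by auto.
  apply lagrangian_U_le; auto.
Qed.

Lemma fixed_point_optimal lb : dual_feasible lb -> is_fixed (length E) p ama_map lb ->
  is_minimizer p n N gamma w x E (ama_u x E lb) /\
  (forall U, is_minimizer p n N gamma w x E U ->
     forall i k, (i < n)%nat -> (k < p)%nat -> U i k = ama_u x E lb i k) /\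
  is_opt_dual p n N gamma w x E lb.
Proof.
  intros HC Hfix. set (Us := ama_u x E lb).
  assert (Hgrow : forall U V, Fgamma p n N gamma w x E Us + / 2 * msq n p (fun i k => U i k - Us i k)
                              <= Lagrangian p n N gamma w x E U V lb) by (apply lagrangian_growth; auto).
  assert (HF : forall U, Fgamma p n N gamma w x E Us + / 2 * msq n p (fun i k => U i k - Us i k)
                         <= Fgamma p n N gamma w x E U) by (intros U; rewrite (F_as_lagrangian lb U); auto).
  split; [|split].
  - intros U. specialize (HF U). pose proof (msq_nonneg n p (fun i k => U i k - Us i k)). lra.
  - intros U HU i k Hi Hk. specialize (HU Us). specialize (HF U).
    pose proof (msq_nonneg n p (fun i k => U i k - Us i k)).
    assert (Hz : msq n p (fun i k => U i k - Us i k) <= 0) by lra.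
    pose proof (msq_zero n p _ Hz i k Hi Hk). simpl in H0. lra.
  - intros U0 HU0 U V. specialize (HU0 Us). specialize (Hgrow U V).
    pose proof (msq_nonneg n p (fun i k => U i k - Us i k)). lra.
Qed.

End AMA.

Lemma ama_u_continuous (p : nat) x E (lams : nat -> nat -> nat -> R) lb :
  (forall l k, (l < length E)%nat -> (k < p)%nat -> Un_cv (fun m => lams m l k) (lb l k)) ->
  forall i k, (k < p)%nat -> Un_cv (fun m => ama_u x E (lams m) i k) (ama_u x E lb i k).
Proof.
  intros Hcv i k Hk. unfold ama_u. apply CV_plus; [apply CV_const|].
  apply (CV_ext (fun m => fsum (length E) (fun l => (kdelta i (fst (edge E l)) - kdelta i (snd (edge E l)))
                                              * lams m l k))); [intros; rewrite Delta_eq; auto|].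
  rewrite Delta_eq. apply CV_fsum. intros l Hl. apply CV_scal, Hcv; auto.
Qed.

Lemma step_size_bound nu rho : 0 <= rho -> nu < 2 / rho -> nu * rho < 2.
Proof.
  intros [Hr|Hr] Hnu; [|subst; lra].
  apply (Rmult_lt_compat_r rho) in Hnu; auto.
  replace (2 / rho * rho) with 2 in Hnu by (field; lra). auto.
Qed.

Theorem mainTheorem7
  (p n : nat) (x : nat -> nat -> R) (N : (nat -> R) -> R) (gamma : R)
  (E : list (nat * nat)) (w : nat -> R) (rho nu : R) (lam0 : nat -> nat -> R)
  (Hp : (0 < p)%nat)
  (HN : is_norm p N)
  (Hgamma : 0 <= gamma)
  (HEnodup : NoDup E)
  (HE : forall e, In e E -> (fst e < snd e)%nat /\ (snd e < n)%nat)
  (Hw : forall l, (l < length E)%nat -> 0 < w l)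
  (Hrho : is_largest_eigenvalue n (Lap E) rho)
  (Hnu : 0 < nu /\ nu < 2 / rho) :
  (forall a b, (a < n * p)%nat -> (b < n * p)%nat -> AtA p E a b = LkronI p E a b) /\
  is_largest_eigenvalue (n * p) (AtA p E) rho /\
  exists Ustar : nat -> nat -> R,
    is_minimizer p n N gamma w x E Ustar /\
    (forall U, is_minimizer p n N gamma w x E U ->
       forall i k, (i < n)%nat -> (k < p)%nat -> U i k = Ustar i k) /\
    (forall i k, (i < n)%nat -> (k < p)%nat ->
       Un_cv (fun m => ama_U p N gamma w x E nu lam0 m i k) (Ustar i k)) /\
    exists Lstar : nat -> nat -> R,
      is_opt_dual p n N gamma w x E Lstar /\
      (forall l k, (l < length E)%nat -> (k < p)%nat ->
         Un_cv (fun m => ama_lam p N gamma w x E nu lam0 m l k) (Lstar l k)).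
Proof.
  destruct Hnu as [Hnu Hnu_rho].
  assert (HEok : edges_ok n E) by (apply edges_ok_of; auto).
  assert (Hrho0 : 0 <= rho) by (apply (Lap_eigenvalue_nonneg n E HEok), Hrho).
  split; [intros; apply AtA_eq; auto|].
  split; [apply AtA_largest_eigenvalue; auto|].
  destruct (ama_converges p n x N gamma E w nu Hp HN Hgamma HEok Hw Hnu rho
              (rayleigh n E HEok rho Hrho) Hrho0 (step_size_bound nu rho Hrho0 Hnu_rho) lam0)
    as [lb [Hfeas [Hfix Hcv]]].
  destruct (fixed_point_optimal p n x N gamma E w nu Hp HN Hgamma HEok Hw Hnu lb Hfeas Hfix)
    as [Hmin [Huniq Hdual]].
  exists (ama_u x E lb). split; [|split; [|split]]; auto.
  - intros i k _ Hk. apply (ama_u_continuous p x E _ lb Hcv i k Hk).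
  - exists lb. auto.
Qed.
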